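(* Let $s\ge2$ be an integer. For a positive integer $M$ let $n_k=\lfloor M\sin^2(k\pi/(2s))\rfloor$ for $k=0,\dots,s$. Then there exists $M_0$ such that for all integers $M\ge M_0$: (i) $n_0<n_1<\dots<n_s$ with $n_{k+1}-n_k\ge3$ for all $k$; (ii) the linear system in $x\in\mathbb{R}^{s+1}$ given by $\sum_{k=0}^s(-1)^kx_kn_k^i=0$ for $1\le i\le s-1$, $\sum_{k=0}^s(-1)^kx_k=0$, $\sum_{k=0}^sx_k=2$, has a unique solution, all of whose entries are positive, and $x_k\to\frac2s-\frac1s\delta_{k0}-\frac1s\delta_{ks}$ as $M\to\infty$; (iii) with $\tilde c_k=\sqrt{x_k}$, the vectors $|0_L\rangle=\sum_{k\text{ even}}\tilde c_k|n_k\rangle$ and $|1_L\rangle=\sum_{k\text{ odd}}\tilde c_k|n_k\rangle$ (sums over $0\le k\le s$) are orthonormal, and $P=|0_L\rangle\langle0_L|+|1_L\rangle\langle1_L|$ satisfies $PSP\in\mathbb{R}P$ for all $S\in\mathfrak S_s$; (iv) $\langle0_L|(a^\dagger a)^s|1_L\rangle=0$ and $\big(\langle0_L|(a^\dagger a)^s|0_L\rangle-\langle1_L|(a^\dagger a)^s|1_L\rangle\big)\big/\big((-1)^sM^s4^{1-s}\big)\to1$ as $M\to\infty$. Furthermore, for every $M\ge1$, $2\min_{S\in\mathfrak S_s}\|(a^\dagger a)^s-S\|\le4(M/4)^s$ (operator norm). Consequently the quantum Fisher information $t^2(\langle0_L|(a^\dagger a)^s|0_L\rangle-\langle1_L|(a^\dagger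 a)^s|1_L\rangle)^2$ of this code divided by $4t^2\min_{S\in\mathfrak S_s}\|(a^\dagger a)^s-S\|^2$ tends to $1$ as $M\to\infty$, and both are asymptotic to $16t^2(M/4)^{2s}$.
   Context: Truncated bosonic mode: the Hilbert space is $\mathrm{span}\{|0\rangle,\dots,|M\rangle\}$ with orthonormal Fock states $|m\rangle$, and $a|m\rangle=\sqrt m|m-1\rangle$ ($a|0\rangle=0$), so $a^\dagger a|m\rangle=m|m\rangle$. $\mathfrak S_s$ is the real span of the Hermitian operators $I$, $a+a^\dagger$, $i(a-a^\dagger)$, and $(a^\dagger a)^i$ for $1\le i\le s-1$. $\lfloor x\rfloor$ is the largest integer $\le x$. *)

From Stdlib Require Import Reals Lra Lia ZArith Bool Arith.
Open Scope R_scope.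

Definition cplx := (R * R)%type.
Definition RtoC (r : R) : cplx := (r, 0).
Definition Ci : cplx := (0, 1).
Definition Cadd (z w : cplx) : cplx := (fst z + fst w, snd z + snd w).
Definition Copp (z : cplx) : cplx := (- fst z, - snd z).
Definition Csub (z w : cplx) : cplx := Cadd z (Copp w).
Definition Cmul (z w : cplx) : cplx :=
  (fst z * fst w - snd z * snd w, fst z * snd w + snd z * fst w).
Definition Cconj (z : cplx) : cplx := (fst z, - snd z).
Definition Cnorm2 (z : cplx) : R := fst z ^ 2 + snd z ^ 2.
Definition Csum (f : nat -> cplx) (n : nat) : cplx :=
  (sum_f_R0 (fun k => fst (f k)) n, sum_f_R0 (fun k => snd (f k)) n).

(** Vectors and operators are given by their coordinates/matrix entries in the
    Fock basis; only indices 0..M are relevant (everything is summed/compared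
    over 0..M only). *)
Definition vec := nat -> cplx.
Definition mat := nat -> nat -> cplx.

Definition madd (A B : mat) : mat := fun i j => Cadd (A i j) (B i j).
Definition msub (A B : mat) : mat := fun i j => Csub (A i j) (B i j).
Definition mscale (c : cplx) (A : mat) : mat := fun i j => Cmul c (A i j).
Definition mmul (M : nat) (A B : mat) : mat :=
  fun i j => Csum (fun k => Cmul (A i k) (B k j)) M.
Definition mid : mat := fun i j => if Nat.eqb i j then RtoC 1 else RtoC 0.
Fixpoint mpow (M : nat) (A : mat) (n : nat) : mat :=
  match n with O => mid | S n' => mmul M A (mpow M A n') end.
Definition mapply (M : nat) (A : mat) (v : vec) : vec :=
  fun i => Csum (fun j => Cmul (A i j) (v j)) M.
Definition inner (M : nat) (u v : vec) : cplx :=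
  Csum (fun m => Cmul (Cconj (u m)) (v m)) M.
Definition vnorm (M : nat) (v : vec) : R := sqrt (sum_f_R0 (fun m => Cnorm2 (v m)) M).
Definition outer (u v : vec) : mat := fun i j => Cmul (u i) (Cconj (v j)).
Definition mat_eq (M : nat) (A B : mat) : Prop :=
  forall i j, (i <= M)%nat -> (j <= M)%nat -> A i j = B i j.
Definition fock (n : nat) : vec := fun m => if Nat.eqb m n then RtoC 1 else RtoC 0.
(** real expectation value <v|A|v> (real for Hermitian A) *)
Definition expval (M : nat) (A : mat) (v : vec) : R := fst (inner M v (mapply M A v)).

(** annihilation operator: a|n> = sqrt n |n-1>, i.e. <m|a|n> = sqrt n if m+1 = n *)
Definition ann : mat := fun m n => if Nat.eqb (S m) n then RtoC (sqrt (INR n)) else RtoC 0.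
Definition adag : mat := fun m n => Cconj (ann n m).
Definition numop (M : nat) : mat := mmul M adag ann.

Definition opnorm (M : nat) (A : mat) (r : R) : Prop :=
  is_lub (fun y => exists v : vec, vnorm M v = 1 /\ y = vnorm M (mapply M A v)) r.

(** generators of S_s: index 0: I, 1: a + a^dag, 2: i(a - a^dag),
    3 + i (0 <= i <= s-2): (a^dag a)^(i+1). *)
Definition gen (M : nat) (l : nat) : mat :=
  match l with
  | O => mid
  | 1%nat => madd ann adag
  | 2%nat => mscale Ci (msub ann adag)
  | S (S (S i)) => mpow M (numop M) (S i)
  end.
(** S is in the real span of I, a+a^dag, i(a-a^dag), (a^dag a)^i (1 <= i <= s-1)
    (for s >= 2 the generators are indices 0 .. s+1). *)
Definition in_S (M s : nat) (S : mat) : Prop :=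
  exists c : nat -> R,
    mat_eq M S (fun i j => Csum (fun l => Cmul (RtoC (c l)) (gen M l i j)) (s + 1)).

Definition is_min_dist (M s : nat) (r : R) : Prop :=
  (exists S, in_S M s S /\ opnorm M (msub (mpow M (numop M) s) S) r) /\
  (forall S r', in_S M s S -> opnorm M (msub (mpow M (numop M) s) S) r' -> r <= r').

(** n_k = floor (M sin^2 (k pi / (2 s))) ; Int_part is the floor function *)
Definition nk (s M k : nat) : nat :=
  Z.to_nat (Int_part (INR M * (sin (INR k * PI / (2 * INR s))) ^ 2)).

Definition lin_sys (s M : nat) (x : nat -> R) : Prop :=
  (forall i : nat, (1 <= i <= s - 1)%nat ->
     sum_f_R0 (fun k => (-1) ^ k * x k * INR (nk s M k) ^ i) s = 0) /\
  sum_f_R0 (fun k => (-1) ^ k * x k) s = 0 /\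
  sum_f_R0 (fun k => x k) s = 2.

Definition ket0 (s M : nat) (x : nat -> R) : vec :=
  fun m => Csum (fun k => if Nat.even k then Cmul (RtoC (sqrt (x k))) (fock (nk s M k) m)
                          else RtoC 0) s.
Definition ket1 (s M : nat) (x : nat -> R) : vec :=
  fun m => Csum (fun k => if Nat.odd k then Cmul (RtoC (sqrt (x k))) (fock (nk s M k) m)
                          else RtoC 0) s.
Definition projP (s M : nat) (x : nat -> R) : mat :=
  madd (outer (ket0 s M x) (ket0 s M x)) (outer (ket1 s M x) (ket1 s M x)).

Definition sig_diff (s M : nat) (x : nat -> R) : R :=
  expval M (mpow M (numop M) s) (ket0 s M x) - expval M (mpow M (numop M) s) (ket1 s M x).

Definition x_lim (s k : nat) : R :=
  2 / INR s - (if Nat.eqb k 0 then 1 / INR s else 0)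
            - (if Nat.eqb k s then 1 / INR s else 0).

From Stdlib Require Import Reals Lra Lia ZArith Bool Arith.
From Stdlib Require Import Classical FunctionalExtensionality IndefiniteDescription.
Open Scope R_scope.

(* For increasing nodes t_0 < ... < t_s, the conditions sum_k y_k t_k^i = 0 (i < s) force
   y to be a multiple of the divided-difference weights w_k = 1 / prod_{j <> k} (t_k - t_j),
   whose signs alternate.  With t_k = n_k the linear system therefore has the unique, positive
   solution x_k ~ |w_k|, and for every polynomial q of degree < s
     <0_L| q(a^dag a) |0_L> - <1_L| q(a^dag a) |1_L> = sum_k (-1)^k x_k q(n_k) = 0.
   Every S in the span has a polynomial diagonal of degree < s, and the gaps n_{k+1} - n_k > 1
   hide its off-diagonal part from the code, which gives P S P in R P; for (a^dag a)^s the same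
   sum equals 2 (-1)^s / sum_k |w_k|.  After scaling by M the nodes tend to sin^2 (k pi / 2s),
   where x tends to the trapezoidal weights of the Chebyshev-Lobatto rule, so the signal is
   (-1)^s 4 (M/4)^s (1 + o(1)).  Conversely |signal| = |sum_k (-1)^k x_k (n_k^s - p(n_k))|
   <= 2 ||(a^dag a)^s - S|| for the diagonal polynomial p of any S, while the rescaled
   Chebyshev polynomial gives ||(a^dag a)^s - S|| <= 2 (M/4)^s; the two bounds squeeze the
   Fisher information.  The minimum norm is attained because the deviation, as a function of
   the values of p at 0, ..., s - 1, is Lipschitz and coercive. *)

Lemma sum_scal (c : R) (f : nat -> R) n :
  sum_f_R0 (fun k => c * f k) n = c * sum_f_R0 f n.
Proof. induction n; simpl; [ring|rewrite IHn; ring]. Qed.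

Lemma sum_opp (f : nat -> R) n :
  sum_f_R0 (fun k => - f k) n = - sum_f_R0 f n.
Proof. induction n; simpl; [ring|rewrite IHn; ring]. Qed.

Lemma sum_swap (a : nat -> nat -> R) n m :
  sum_f_R0 (fun i => sum_f_R0 (fun j => a i j) m) n =
  sum_f_R0 (fun j => sum_f_R0 (fun i => a i j) n) m.
Proof. induction n; simpl; [reflexivity|rewrite IHn, <- plus_sum; reflexivity]. Qed.

Lemma sum_first (f : nat -> R) n :
  sum_f_R0 f (S n) = f 0%nat + sum_f_R0 (fun j => f (S j)) n.
Proof. induction n; simpl in *; [ring|rewrite IHn; ring]. Qed.

Lemma sum_if_eq (c : nat -> R) a n : (a <= n)%nat ->
  sum_f_R0 (fun k => if Nat.eqb k a then c k else 0) n = c a.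
Proof.
  induction n; intros H; cbn -[Nat.eqb].
  - replace a with 0%nat by lia; reflexivity.
  - destruct (Nat.eq_dec a (S n)) as [->|Hne].
    + rewrite Nat.eqb_refl, (sum_eq_R0 _ n); [ring|].
      intros k Hk. destruct (Nat.eqb_spec k (S n)); [lia|reflexivity].
    + destruct (Nat.eqb_spec (S n) a); [lia|]. rewrite IHn by lia. ring.
Qed.

Lemma sum_nonneg (f : nat -> R) n : (forall k, (k <= n)%nat -> 0 <= f k) ->
  0 <= sum_f_R0 f n.
Proof.
  intros H. rewrite <- (sum_eq_R0 (fun _ => 0) n) by auto. apply sum_Rle. auto.
Qed.

Lemma sum_pos (f : nat -> R) n : (forall k, (k <= n)%nat -> 0 < f k) ->
  0 < sum_f_R0 f n.
Proof.
  induction n; intros H; simpl; [apply H; lia|].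
  apply Rplus_lt_0_compat; [apply IHn; intros; apply H; lia | apply H; lia].
Qed.

Lemma sum_term_le (f : nat -> R) n k : (forall j, (j <= n)%nat -> 0 <= f j) ->
  (k <= n)%nat -> f k <= sum_f_R0 f n.
Proof.
  induction n; intros H Hk; simpl.
  - replace k with 0%nat by lia; lra.
  - assert (0 <= f (S n)) by (apply H; lia).
    destruct (Nat.eq_dec k (S n)) as [->|Hne].
    + assert (0 <= sum_f_R0 f n) by (apply sum_nonneg; intros; apply H; lia). lra.
    + assert (f k <= sum_f_R0 f n) by (apply IHn; [intros; apply H; lia|lia]). lra.
Qed.

Lemma prod_first (f : nat -> R) n :
  prod_f_R0 f (S n) = f 0%nat * prod_f_R0 (fun j => f (S j)) n.
Proof. induction n; simpl in *; [ring|rewrite IHn; ring]. Qed.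

Lemma prod_eq (f g : nat -> R) n :
  (forall k, (k <= n)%nat -> f k = g k) -> prod_f_R0 f n = prod_f_R0 g n.
Proof.
  induction n; intros H; simpl; [apply H; lia|].
  rewrite IHn by (intros; apply H; lia). rewrite H by lia. reflexivity.
Qed.

Lemma prod_neq_0 (f : nat -> R) n :
  (forall k, (k <= n)%nat -> f k <> 0) -> prod_f_R0 f n <> 0.
Proof.
  induction n; intros H; simpl; [apply H; lia|].
  apply Rmult_integral_contrapositive_currified; [apply IHn; intros|]; apply H; lia.
Qed.

Lemma prod_eq_1 (f : nat -> R) N : (forall k, (k <= N)%nat -> f k = 1) -> prod_f_R0 f N = 1.
Proof.
  induction N; intros H; simpl; [apply H; lia|]. rewrite IHN, H by (auto; lia). ring.
Qed.

Lemma prod_eq_0 (f : nat -> R) N k : (k <= N)%nat -> f k = 0 -> prod_f_R0 f N = 0.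
Proof.
  induction N; intros Hk H; simpl.
  - replace k with 0%nat in H by lia; auto.
  - destruct (Nat.eq_dec k (S N)) as [->|]; [rewrite H; ring|]. rewrite IHN by (auto; lia). ring.
Qed.

Lemma neg1_pow_sq n : (-1) ^ n * (-1) ^ n = 1.
Proof. rewrite <- pow_add. replace (n + n)%nat with (2 * n)%nat by lia. apply pow_1_even. Qed.

Lemma neg1_pow_neq_0 n : (-1) ^ n <> 0.
Proof. apply pow_nonzero; lra. Qed.

Lemma neg1_pow_even k : (-1) ^ k = if Nat.even k then 1 else -1.
Proof.
  induction k; [reflexivity|]. rewrite Nat.even_succ, <- Nat.negb_even. simpl.
  rewrite IHk. destruct (Nat.even k); simpl; ring.
Qed.

Lemma Rabs_neg1_pow n : Rabs ((-1) ^ n) = 1.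
Proof. rewrite <- RPow_abs, Rabs_left by lra. replace (- -1) with 1 by ring. apply pow1. Qed.

Lemma cplx_eq (z w : cplx) : fst z = fst w -> snd z = snd w -> z = w.
Proof. destruct z, w; simpl; intros; subst; reflexivity. Qed.

Lemma Csum_RtoC (f : nat -> R) n :
  Csum (fun k => RtoC (f k)) n = RtoC (sum_f_R0 f n).
Proof. unfold Csum, RtoC; simpl. f_equal. apply sum_eq_R0; auto. Qed.

Lemma Csum_eq (f g : nat -> cplx) n :
  (forall k, (k <= n)%nat -> f k = g k) -> Csum f n = Csum g n.
Proof. intros H; unfold Csum; f_equal; apply sum_eq; intros k Hk; rewrite H; auto. Qed.

Definition delta (a b : nat) : R := if Nat.eqb a b then 1 else 0.

Lemma fock_RtoC n m : fock n m = RtoC (delta m n).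
Proof. unfold fock, delta; destruct (Nat.eqb m n); reflexivity. Qed.

Definition diag_mat (d : nat -> R) : mat :=
  fun a b => if Nat.eqb a b then RtoC (d a) else RtoC 0.

Lemma ann_neq i j : j <> S i -> ann i j = RtoC 0.
Proof. intros H. unfold ann. destruct (Nat.eqb_spec (S i) j); [lia|reflexivity]. Qed.

Lemma numop_diag M a b : (a <= M)%nat -> numop M a b = diag_mat INR a b.
Proof.
  intros Ha. unfold numop, mmul, adag.
  rewrite (Csum_eq _ (fun k => RtoC (if Nat.eqb k (pred a) then
       (if Nat.eqb a 0 then 0 else if Nat.eqb a b then INR a else 0) else 0))).
  - rewrite Csum_RtoC, sum_if_eq by lia. unfold diag_mat.
    destruct (Nat.eqb_spec a 0); destruct (Nat.eqb_spec a b); subst; simpl; auto.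
  - intros k Hk. unfold ann.
    destruct (Nat.eqb_spec (S k) a); destruct (Nat.eqb_spec (S k) b);
    destruct (Nat.eqb_spec k (pred a)); destruct (Nat.eqb_spec a 0);
    destruct (Nat.eqb_spec a b); subst; try lia; unfold Cconj, Cmul, RtoC;
    apply cplx_eq; cbn [fst snd]; try ring.
    rewrite sqrt_sqrt; [ring|apply pos_INR].
Qed.

Lemma numop_pow_diag M i a b : (a <= M)%nat -> (b <= M)%nat ->
  mpow M (numop M) i a b = diag_mat (fun m => INR m ^ i) a b.
Proof.
  revert a b; induction i; intros a b Ha Hb; simpl.
  - unfold mid, diag_mat. destruct (Nat.eqb a b); reflexivity.
  - unfold mmul.
    rewrite (Csum_eq _ (fun k => RtoC (if Nat.eqb k a then
         INR a * (if Nat.eqb a b then INR a ^ i else 0) else 0))).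
    + rewrite Csum_RtoC, sum_if_eq by lia. unfold diag_mat.
      destruct (Nat.eqb a b); f_equal; ring.
    + intros k Hk. rewrite numop_diag, IHi by lia. unfold diag_mat.
      destruct (Nat.eqb_spec a k); destruct (Nat.eqb_spec k a); destruct (Nat.eqb_spec k b);
      destruct (Nat.eqb_spec a b); subst; try lia; apply cplx_eq; simpl; ring.
Qed.

Lemma mapply_diag M A d v a : (a <= M)%nat ->
  (forall i j, (i <= M)%nat -> (j <= M)%nat -> A i j = diag_mat d i j) ->
  mapply M A v a = Cmul (RtoC (d a)) (v a).
Proof.
  intros Ha HA. unfold mapply, Csum.
  apply cplx_eq; simpl.
  - rewrite (sum_eq _ (fun k => if Nat.eqb k a then d a * fst (v a) else 0)).
    + rewrite sum_if_eq by lia. ring.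
    + intros k Hk; rewrite HA by lia; unfold diag_mat, RtoC;
      destruct (Nat.eqb_spec a k); destruct (Nat.eqb_spec k a); subst; try lia; simpl; ring.
  - rewrite (sum_eq _ (fun k => if Nat.eqb k a then d a * snd (v a) else 0)).
    + rewrite sum_if_eq by lia. ring.
    + intros k Hk; rewrite HA by lia; unfold diag_mat, RtoC;
      destruct (Nat.eqb_spec a k); destruct (Nat.eqb_spec k a); subst; try lia; simpl; ring.
Qed.
Definition node_prod (t : nat -> R) (n k : nat) : R :=
  prod_f_R0 (fun j => if Nat.eqb j k then 1 else t k - t j) n.
Definition dd_weight (t : nat -> R) (n k : nat) : R := / node_prod t n k.
Definition dd_moment (t : nat -> R) (n i : nat) : R :=
  sum_f_R0 (fun k => dd_weight t n k * t k ^ i) n.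
Definition inj_on (t : nat -> R) (n : nat) : Prop :=
  forall j k, (j <= n)%nat -> (k <= n)%nat -> j <> k -> t j <> t k.
Definition shift (t : nat -> R) : nat -> R := fun j => t (S j).

Lemma node_prod_neq_0 t n k : inj_on t n -> (k <= n)%nat -> node_prod t n k <> 0.
Proof.
  intros Hi Hk. unfold node_prod. apply prod_neq_0. intros j Hj.
  destruct (Nat.eqb_spec j k); [lra|]. intro E. apply (Hi k j); auto. lra.
Qed.

Lemma node_prod_last t n k : (k <= n)%nat ->
  node_prod t (S n) k = node_prod t n k * (t k - t (S n)).
Proof.
  intros Hk. unfold node_prod. cbn -[Nat.eqb]. destruct (Nat.eqb_spec (S n) k); [lia|]. reflexivity.
Qed.

Lemma node_prod_first t n k : (k <= n)%nat ->
  node_prod t (S n) (S k) = (t (S k) - t 0%nat) * node_prod (shift t) n k.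
Proof.
  intros Hk. unfold node_prod. rewrite prod_first. f_equal.
Qed.

Lemma inj_on_pred t n : inj_on t (S n) -> inj_on t n.
Proof. intros H j k Hj Hk; apply H; lia. Qed.

Lemma inj_on_shift t n : inj_on t (S n) -> inj_on (shift t) n.
Proof. intros H j k Hj Hk Hne; unfold shift; apply H; lia. Qed.

Lemma dd_moment_rec_last t n i : inj_on t (S n) ->
  dd_moment t (S n) (S i) = dd_moment t n i + t (S n) * dd_moment t (S n) i.
Proof.
  intros Hi. unfold dd_moment.
  rewrite (sum_eq (fun k => dd_weight t (S n) k * t k ^ S i)
    (fun k => (if Nat.eqb k (S n) then 0 else dd_weight t (S n) k * (t k - t (S n)) * t k ^ i)
              + t (S n) * (dd_weight t (S n) k * t k ^ i))).
  2:{ intros k Hk. destruct (Nat.eqb_spec k (S n)); [subst; simpl; ring|]. simpl; ring. }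
  rewrite plus_sum, sum_scal. f_equal. simpl. rewrite Nat.eqb_refl.
  rewrite Rplus_0_r. apply sum_eq. intros k Hk.
  destruct (Nat.eqb_spec k (S n)); [lia|].
  unfold dd_weight. rewrite node_prod_last by lia.
  assert (node_prod t n k <> 0) by (apply node_prod_neq_0; [apply inj_on_pred; auto|lia]).
  assert (t k - t (S n) <> 0) by (intro E; apply (Hi k (S n)); try lia; lra).
  field. auto.
Qed.

Lemma dd_moment_rec_first t n i : inj_on t (S n) ->
  dd_moment t (S n) (S i) = dd_moment (shift t) n i + t 0%nat * dd_moment t (S n) i.
Proof.
  intros Hi. unfold dd_moment.
  rewrite (sum_eq (fun k => dd_weight t (S n) k * t k ^ S i)
    (fun k => (if Nat.eqb k 0 then 0 else dd_weight t (S n) k * (t k - t 0%nat) * t k ^ i)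
              + t 0%nat * (dd_weight t (S n) k * t k ^ i))).
  2:{ intros k Hk. destruct (Nat.eqb_spec k 0); [subst; simpl; ring|]. simpl; ring. }
  rewrite plus_sum, sum_scal. f_equal. rewrite sum_first. simpl (Nat.eqb 0 0).
  rewrite Rplus_0_l. apply sum_eq. intros k Hk. simpl (Nat.eqb (S k) 0).
  unfold dd_weight. rewrite node_prod_first by lia. unfold shift.
  assert (node_prod (shift t) n k <> 0) by (apply node_prod_neq_0; [apply inj_on_shift; auto|lia]).
  assert (t (S k) - t 0%nat <> 0) by (intro E; apply (Hi (S k) 0%nat); try lia; lra).
  unfold shift in *. field. auto.
Qed.

Lemma dd_moment_eq : forall n t, inj_on t n -> forall i, (i <= n)%nat ->
  dd_moment t n i = if Nat.eqb i n then 1 else 0.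
Proof.
  induction n; intros t Hi i Hin.
  - assert (i = 0%nat) by lia; subst. unfold dd_moment, dd_weight, node_prod. simpl. field.
  - assert (Hlow : forall i, (i <= n)%nat -> dd_moment t (S n) i = 0).
    { intros j Hj.
      assert (E1 := dd_moment_rec_last t n j Hi). assert (E2 := dd_moment_rec_first t n j Hi).
      rewrite IHn in E1 by (auto; apply inj_on_pred; auto).
      rewrite IHn in E2 by (auto; apply inj_on_shift; auto).
      assert (t (S n) - t 0%nat <> 0) by (intro E; apply (Hi (S n) 0%nat); try lia; lra).
      assert ((t (S n) - t 0%nat) * dd_moment t (S n) j = 0) by lra.
      apply Rmult_integral in H0. destruct H0; [contradiction|auto]. }
    destruct (Nat.eqb_spec i (S n)).
    + subst. rewrite dd_moment_rec_last by auto. rewrite IHn by (auto; apply inj_on_pred; auto).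
      rewrite Nat.eqb_refl, Hlow by lia. ring.
    + apply Hlow; lia.
Qed.

Lemma sum_mul_node_diff (y t : nat -> R) n i :
  sum_f_R0 (fun k => y k * t k ^ S i) (S n) - t (S n) * sum_f_R0 (fun k => y k * t k ^ i) (S n)
  = sum_f_R0 (fun k => y k * (t k - t (S n)) * t k ^ i) n.
Proof.
  rewrite <- sum_scal. unfold Rminus. rewrite <- sum_opp, <- plus_sum. simpl.
  replace (y (S n) * (t (S n) * t (S n) ^ i) + - (t (S n) * (y (S n) * t (S n) ^ i)))
    with 0 by ring.
  rewrite Rplus_0_r. apply sum_eq; intros; simpl; ring.
Qed.

Lemma moment_annihilator_eq : forall n t (y : nat -> R), inj_on t n ->
  (forall i, (i < n)%nat -> sum_f_R0 (fun k => y k * t k ^ i) n = 0) ->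
  forall k, (k <= n)%nat -> y k = dd_weight t n k * sum_f_R0 (fun j => y j * t j ^ n) n.
Proof.
  induction n; intros t y Hi Hy k Hk.
  - replace k with 0%nat by lia. unfold dd_weight, node_prod; simpl. field.
  - set (C := sum_f_R0 (fun j => y j * t j ^ S n) (S n)).
    set (y' := fun k => y k * (t k - t (S n))).
    assert (Hy' : forall i, (i < n)%nat -> sum_f_R0 (fun k => y' k * t k ^ i) n = 0).
    { intros i Hin. unfold y'. rewrite <- sum_mul_node_diff, !Hy by lia. ring. }
    assert (HC : sum_f_R0 (fun j => y' j * t j ^ n) n = C).
    { unfold y', C. rewrite <- sum_mul_node_diff, (Hy n) by lia. ring. }
    assert (IH := IHn t y' (inj_on_pred _ _ Hi) Hy'). rewrite HC in IH.
    assert (Hlow : forall k, (k <= n)%nat -> y k = dd_weight t (S n) k * C).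
    { intros j Hj. specialize (IH j Hj). unfold y' in IH. unfold dd_weight in *.
      rewrite node_prod_last by auto.
      assert (node_prod t n j <> 0) by (apply node_prod_neq_0; [apply inj_on_pred; auto|lia]).
      assert (t j - t (S n) <> 0) by (intro E; apply (Hi j (S n)); try lia; lra).
      apply (Rmult_eq_reg_r (t j - t (S n))); auto. rewrite IH. field. auto. }
    destruct (Nat.eq_dec k (S n)) as [->|]; [|apply Hlow; lia].
    (* the top coefficient is fixed by the zeroth moment, which vanishes for both y and the weights *)
    assert (H0 := Hy 0%nat ltac:(lia)).
    assert (HF := dd_moment_eq (S n) t Hi 0%nat ltac:(lia)). simpl (Nat.eqb 0 (S n)) in HF.
    unfold dd_moment in HF. simpl in H0, HF.
    rewrite (sum_eq (fun k => y k * 1) (fun k => C * dd_weight t (S n) k)) in H0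
      by (intros; rewrite Hlow by lia; ring).
    rewrite (sum_eq (fun k => dd_weight t (S n) k * 1) (dd_weight t (S n))) in HF by (intros; ring).
    rewrite sum_scal in H0. fold C. nra.
Qed.

Definition incr_on (t : nat -> R) (s : nat) : Prop :=
  forall j k, (j < k)%nat -> (k <= s)%nat -> t j < t k.

Lemma incr_on_inj t s : incr_on t s -> inj_on t s.
Proof.
  intros H j k Hj Hk Hne. assert (h0 : (j < k \/ k < j)%nat) by lia; destruct h0 as [h|h].
  - specialize (H j k h Hk); lra.
  - specialize (H k j h Hj); lra.
Qed.

Lemma node_prod_sign t s k : incr_on t s -> (k <= s)%nat -> forall N, (N <= s)%nat ->
  0 < (if Nat.leb k N then (-1) ^ (N - k) else 1) *
      prod_f_R0 (fun j => if Nat.eqb j k then 1 else t k - t j) N.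
Proof.
  intros Ht Hk. induction N; intros HN.
  - simpl. destruct (Nat.eqb_spec 0 k).
    + subst. simpl. lra.
    + destruct k; [lia|]. simpl. assert (t 0%nat < t (S k)) by (apply Ht; lia). lra.
  - cbn [prod_f_R0]. specialize (IHN ltac:(lia)).
    destruct (Nat.eqb_spec (S N) k).
    + subst. rewrite Nat.leb_refl, Nat.sub_diag. destruct (Nat.leb_spec (S N) N); [lia|].
      simpl in *. lra.
    + destruct (Nat.leb_spec k (S N)); destruct (Nat.leb_spec k N); try lia.
      * replace (S N - k)%nat with (S (N - k)) by lia. simpl.
        assert (t k < t (S N)) by (apply Ht; lia).
        replace (-1 * (-1) ^ (N - k) * (prod_f_R0 (fun j => if Nat.eqb j k then 1 else t k - t j) N * (t k - t (S N))))
          with (((-1) ^ (N - k) * prod_f_R0 (fun j => if Nat.eqb j k then 1 else t k - t j) N) * (t (S N) - t k)) by ring.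
        apply Rmult_lt_0_compat; lra.
      * assert (t (S N) < t k) by (apply Ht; lia).
        rewrite Rmult_1_l in *. apply Rmult_lt_0_compat; lra.
Qed.

Definition alt_weight (t : nat -> R) (s k : nat) : R := (-1) ^ s * (-1) ^ k * dd_weight t s k.

Lemma alt_weight_pos t s k : incr_on t s -> (k <= s)%nat -> 0 < alt_weight t s k.
Proof.
  intros Ht Hk. assert (H := node_prod_sign t s k Ht Hk s (le_n _)).
  rewrite (proj2 (Nat.leb_le k s) Hk) in H. fold (node_prod t s k) in H.
  unfold alt_weight, dd_weight.
  assert (E : (-1) ^ s * (-1) ^ k = (-1) ^ (s - k)).
  { replace s with ((s - k) + k)%nat at 1 by lia. rewrite pow_add.
    rewrite Rmult_assoc, neg1_pow_sq. ring. }
  rewrite E.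
  assert (node_prod t s k <> 0) by (intro Z; rewrite Z in H; lra).
  replace ((-1) ^ (s - k) * / node_prod t s k) with (/ ((-1) ^ (s - k) * node_prod t s k)).
  - apply Rinv_0_lt_compat; auto.
  - rewrite <- (Rmult_1_l (/ ((-1) ^ (s - k) * node_prod t s k))), <- (neg1_pow_sq (s - k)).
    field. split; auto. apply neg1_pow_neq_0.
Qed.

Definition moment_sys (s : nat) (t : nat -> R) (x : nat -> R) : Prop :=
  (forall i : nat, (1 <= i <= s - 1)%nat ->
     sum_f_R0 (fun k => (-1) ^ k * x k * t k ^ i) s = 0) /\
  sum_f_R0 (fun k => (-1) ^ k * x k) s = 0 /\
  sum_f_R0 (fun k => x k) s = 2.

Definition weight_total t s := sum_f_R0 (alt_weight t s) s.
Definition moment_sol (t : nat -> R) (s k : nat) : R := 2 * alt_weight t s k / weight_total t s.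

Lemma weight_total_pos t s : incr_on t s -> 0 < weight_total t s.
Proof. intros; apply sum_pos; intros; apply alt_weight_pos; auto. Qed.

Lemma moment_sol_pos t s k : incr_on t s -> (k <= s)%nat -> 0 < moment_sol t s k.
Proof.
  intros. unfold moment_sol. assert (0 < alt_weight t s k) by (apply alt_weight_pos; auto).
  assert (0 < weight_total t s) by (apply weight_total_pos; auto).
  apply Rdiv_lt_0_compat; lra.
Qed.

Lemma signed_moment_sol t s k :
  (-1) ^ k * moment_sol t s k = 2 * (-1) ^ s / weight_total t s * dd_weight t s k.
Proof.
  unfold moment_sol, alt_weight. unfold Rdiv.
  replace ((-1) ^ k * (2 * ((-1) ^ s * (-1) ^ k * dd_weight t s k) * / weight_total t s))
    with (((-1) ^ k * (-1) ^ k) * (2 * (-1) ^ s * / weight_total t s * dd_weight t s k)) by ring.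
  rewrite neg1_pow_sq. ring.
Qed.

Lemma moment_sol_sys t s : (1 <= s)%nat -> incr_on t s -> moment_sys s t (moment_sol t s).
Proof.
  intros Hs Ht. assert (HA := weight_total_pos t s Ht).
  assert (HF : forall i, (i < s)%nat ->
     sum_f_R0 (fun k => (-1) ^ k * moment_sol t s k * t k ^ i) s = 0).
  { intros i Hi.
    rewrite (sum_eq _ (fun k => (2 * (-1) ^ s / weight_total t s) * (dd_weight t s k * t k ^ i)))
      by (intros; rewrite signed_moment_sol; ring).
    rewrite sum_scal. fold (dd_moment t s i). rewrite dd_moment_eq by (auto using incr_on_inj; lia).
    destruct (Nat.eqb_spec i s); [lia|ring]. }
  split; [|split].
  - intros i Hi. apply HF. lia.
  - rewrite <- (HF 0%nat) by lia. apply sum_eq; intros; simpl; ring.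
  - unfold moment_sol. unfold Rdiv.
    rewrite (sum_eq _ (fun k => (2 * / weight_total t s) * alt_weight t s k)) by (intros; ring).
    rewrite sum_scal. fold (weight_total t s). field. lra.
Qed.

Lemma moment_sys_unique t s x : (1 <= s)%nat -> incr_on t s -> moment_sys s t x ->
  (forall k, (k <= s)%nat -> x k = moment_sol t s k) /\
  sum_f_R0 (fun k => (-1) ^ k * x k * t k ^ s) s = 2 * (-1) ^ s / weight_total t s.
Proof.
  intros Hs Ht [H1 [H2 H3]].
  set (C := sum_f_R0 (fun j => (-1) ^ j * x j * t j ^ s) s).
  assert (Hy : forall k, (k <= s)%nat -> (-1) ^ k * x k = dd_weight t s k * C).
  { intros k Hk. apply (moment_annihilator_eq s t (fun k => (-1) ^ k * x k)); auto using incr_on_inj.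
    intros i Hi. destruct i.
    - rewrite <- H2. apply sum_eq; intros; simpl; ring.
    - apply H1. lia. }
  assert (Hx : forall k, (k <= s)%nat -> x k = (-1) ^ s * C * alt_weight t s k).
  { intros k Hk. unfold alt_weight.
    replace ((-1) ^ s * C * ((-1) ^ s * (-1) ^ k * dd_weight t s k))
      with (((-1) ^ s * (-1) ^ s) * ((-1) ^ k * (dd_weight t s k * C))) by ring.
    rewrite neg1_pow_sq, <- Hy by auto.
    replace (1 * ((-1) ^ k * ((-1) ^ k * x k))) with (((-1) ^ k * (-1) ^ k) * x k) by ring.
    rewrite neg1_pow_sq. ring. }
  assert (HA := weight_total_pos t s Ht).
  assert (HC : (-1) ^ s * C * weight_total t s = 2).
  { rewrite <- H3. unfold weight_total. rewrite <- sum_scal. apply sum_eq. intros; rewrite Hx; auto. }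
  assert (HC' : C = 2 * (-1) ^ s / weight_total t s).
  { apply (Rmult_eq_reg_l ((-1) ^ s)); [|apply neg1_pow_neq_0].
    replace ((-1) ^ s * (2 * (-1) ^ s / weight_total t s)) with (2 * ((-1) ^ s * (-1) ^ s) / weight_total t s) by (unfold Rdiv; ring).
    rewrite neg1_pow_sq. apply (Rmult_eq_reg_r (weight_total t s)); [|lra].
    rewrite HC. field. lra. }
  split.
  - intros k Hk. rewrite Hx by auto. unfold moment_sol. rewrite HC'.
    replace ((-1) ^ s * (2 * (-1) ^ s / weight_total t s) * alt_weight t s k)
      with (((-1) ^ s * (-1) ^ s) * (2 * alt_weight t s k / weight_total t s)) by (field; lra).
    rewrite neg1_pow_sq. ring.
  - exact HC'.
Qed.

Lemma node_prod_scale (c : R) (t : nat -> R) N k :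
  prod_f_R0 (fun j => if Nat.eqb j k then 1 else c * t k - c * t j) N =
  c ^ (if Nat.leb k N then N else S N) * prod_f_R0 (fun j => if Nat.eqb j k then 1 else t k - t j) N.
Proof.
  induction N.
  - simpl. destruct (Nat.eqb_spec 0 k); destruct k; try lia; simpl; ring.
  - cbn [prod_f_R0]. rewrite IHN.
    destruct (Nat.eqb_spec (S N) k).
    + subst. rewrite Nat.leb_refl. destruct (Nat.leb_spec (S N) N); [lia|]. simpl; ring.
    + destruct (Nat.leb_spec k N); destruct (Nat.leb_spec k (S N)); try lia; simpl; ring.
Qed.

Lemma dd_weight_scale c t s k : c <> 0 -> (k <= s)%nat ->
  dd_weight (fun j => c * t j) s k = / c ^ s * dd_weight t s k.
Proof.
  intros Hc Hk. unfold dd_weight, node_prod. rewrite node_prod_scale.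
  rewrite (proj2 (Nat.leb_le k s) Hk). rewrite Rinv_mult. reflexivity.
Qed.

Lemma weight_total_scale c t s : c <> 0 ->
  weight_total (fun j => c * t j) s = / c ^ s * weight_total t s.
Proof.
  intros Hc. unfold weight_total, alt_weight. rewrite <- sum_scal. apply sum_eq. intros k Hk.
  rewrite dd_weight_scale by auto. ring.
Qed.

Lemma moment_sol_scale c t s k : c <> 0 -> (k <= s)%nat -> incr_on t s ->
  moment_sol (fun j => c * t j) s k = moment_sol t s k.
Proof.
  intros Hc Hk Ht. unfold moment_sol. rewrite weight_total_scale by auto. unfold alt_weight. rewrite dd_weight_scale by auto.
  assert (0 < weight_total t s) by (apply weight_total_pos; auto). assert (c ^ s <> 0) by (apply pow_nonzero; auto).
  field. split; [lra|auto].
Qed.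

Definition is_poly (d : nat) (f : R -> R) : Prop :=
  exists c : nat -> R, forall x, f x = sum_f_R0 (fun i => c i * x ^ i) d.

Lemma is_poly_ext d f g : (forall x, f x = g x) -> is_poly d f -> is_poly d g.
Proof. intros E [c Hc]. exists c. intros x. rewrite <- E. auto. Qed.

Lemma is_poly_mono d d' f : (d <= d')%nat -> is_poly d f -> is_poly d' f.
Proof.
  intros Hd [c Hc]. exists (fun i => if Nat.leb i d then c i else 0). intros x.
  rewrite Hc. induction Hd.
  - apply sum_eq. intros k Hk. rewrite (proj2 (Nat.leb_le k d) Hk). auto.
  - cbn -[Nat.leb]. rewrite IHHd. destruct (Nat.leb_spec (S m) d); [lia|]. ring.
Qed.

Lemma is_poly_add d f g : is_poly d f -> is_poly d g -> is_poly d (fun x => f x + g x).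
Proof.
  intros [c Hc] [e He]. exists (fun i => c i + e i). intros x.
  rewrite Hc, He, <- plus_sum. apply sum_eq; intros; ring.
Qed.

Lemma is_poly_scal d a f : is_poly d f -> is_poly d (fun x => a * f x).
Proof.
  intros [c Hc]. exists (fun i => a * c i). intros x.
  rewrite Hc, <- sum_scal. apply sum_eq; intros; ring.
Qed.

Lemma is_poly_const d a : is_poly d (fun _ => a).
Proof.
  apply (is_poly_mono 0); [lia|]. exists (fun _ => a). intros x. simpl. ring.
Qed.

Lemma is_poly_mulx d f : is_poly d f -> is_poly (S d) (fun x => x * f x).
Proof.
  intros [c Hc]. exists (fun i => match i with O => 0 | S j => c j end). intros x.
  rewrite sum_first, Hc. simpl. rewrite Rmult_0_l, Rplus_0_l, <- sum_scal.
  apply sum_eq; intros; ring.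
Qed.

Lemma is_poly_pow n : is_poly n (fun x => x ^ n).
Proof.
  induction n.
  - apply (is_poly_ext 0 (fun _ => 1)); [intros; simpl; auto|apply is_poly_const].
  - apply (is_poly_ext (S n) (fun x => x * x ^ n)); [intros; simpl; auto|]. apply is_poly_mulx; auto.
Qed.

Lemma is_poly_opp d f : is_poly d f -> is_poly d (fun x => - f x).
Proof. intros H. apply (is_poly_ext d (fun x => -1 * f x)); [intros; ring|apply is_poly_scal; auto]. Qed.

Lemma is_poly_sub d f g : is_poly d f -> is_poly d g -> is_poly d (fun x => f x - g x).
Proof. intros; apply is_poly_add; auto; apply is_poly_opp; auto. Qed.

Lemma is_poly_sum d (g : nat -> R -> R) N : (forall k, (k <= N)%nat -> is_poly d (g k)) ->
  is_poly d (fun x => sum_f_R0 (fun k => g k x) N).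
Proof.
  induction N; intros H; simpl; [apply H; lia|].
  apply is_poly_add; [apply IHN; intros; apply H; lia|apply H; lia].
Qed.

Lemma is_poly_mul_aff d f al be : is_poly d f -> is_poly (S d) (fun x => f x * (al * x + be)).
Proof.
  intros H. apply (is_poly_ext (S d) (fun x => al * (x * f x) + be * f x)); [intros; ring|].
  apply is_poly_add; [apply is_poly_scal, is_poly_mulx; auto|apply is_poly_mono with d; [lia|apply is_poly_scal; auto]].
Qed.

Lemma is_poly_aff_pow n al be : is_poly n (fun x => (al * x + be) ^ n).
Proof.
  induction n.
  - apply (is_poly_ext 0 (fun _ => 1)); [intros; simpl; auto|apply is_poly_const].
  - apply (is_poly_ext (S n) (fun x => (al * x + be) ^ n * (al * x + be))); [intros; simpl; ring|].
    apply is_poly_mul_aff; auto.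
Qed.

Lemma is_poly_comp_aff d f al be : is_poly d f -> is_poly d (fun x => f (al * x + be)).
Proof.
  intros [c Hc]. apply (is_poly_ext d (fun x => sum_f_R0 (fun i => c i * (al * x + be) ^ i) d)).
  - intros; rewrite Hc; auto.
  - apply is_poly_sum. intros k Hk. apply is_poly_scal. apply is_poly_mono with k; auto. apply is_poly_aff_pow.
Qed.

Definition lead_poly (d : nat) (ka : R) (f : R -> R) : Prop :=
  is_poly d (fun x => f x - ka * x ^ S d).

Lemma lead_poly_aff_pow d al be : lead_poly d (al ^ S d) (fun x => (al * x + be) ^ S d).
Proof.
  induction d.
  - unfold lead_poly. apply (is_poly_ext 0 (fun _ => be)); [intros; simpl; ring|apply is_poly_const].
  - unfold lead_poly in *.
    apply (is_poly_ext (S d) (fun x => ((al * x + be) ^ S d - al ^ S d * x ^ S d) * (al * x + be)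
                                  + (al ^ S d * be) * x ^ S d)).
    + intros x. simpl. ring.
    + apply is_poly_add; [apply is_poly_mul_aff; auto|].
      apply is_poly_scal. apply is_poly_mono with (S d); [lia|]. apply is_poly_pow.
Qed.

Lemma sum_mul_poly_eq_0 (y t : nat -> R) (n d : nat) (q : R -> R) :
  (forall i, (i <= d)%nat -> sum_f_R0 (fun k => y k * t k ^ i) n = 0) ->
  is_poly d q -> sum_f_R0 (fun k => y k * q (t k)) n = 0.
Proof.
  intros H [c Hc].
  rewrite (sum_eq _ (fun k => sum_f_R0 (fun i => c i * (y k * t k ^ i)) d)).
  - rewrite sum_swap. apply sum_eq_R0. intros i Hi.
    rewrite sum_scal, H by auto. ring.
  - intros k Hk. rewrite Hc, <- sum_scal. apply sum_eq; intros; ring.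
Qed.

Lemma sum_mul_lead_poly (y t : nat -> R) (n d : nat) (q : R -> R) ka :
  (forall i, (i <= d)%nat -> sum_f_R0 (fun k => y k * t k ^ i) n = 0) ->
  lead_poly d ka q ->
  sum_f_R0 (fun k => y k * q (t k)) n = ka * sum_f_R0 (fun k => y k * t k ^ S d) n.
Proof.
  intros H HL. assert (E := sum_mul_poly_eq_0 y t n d _ H HL). cbv beta in E.
  rewrite <- sum_scal.
  apply Rminus_diag_uniq. rewrite <- E. unfold Rminus. rewrite <- sum_opp, <- plus_sum.
  apply sum_eq; intros; ring.
Qed.

Fixpoint cheb (n : nat) (x : R) : R :=
  match n with
  | O => 1
  | S m => match m with
           | O => x
           | S p => 2 * x * cheb m x - cheb p x
           end
  end.

Lemma cheb_SS n x : cheb (S (S n)) x = 2 * x * cheb (S n) x - cheb n x.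
Proof. reflexivity. Qed.

Lemma cheb_cos n th : cheb n (cos th) = cos (INR n * th).
Proof.
  assert (H : forall n, cheb n (cos th) = cos (INR n * th) /\
                        cheb (S n) (cos th) = cos (INR (S n) * th)).
  { induction n0.
    - simpl. split; [rewrite Rmult_0_l, cos_0; auto|rewrite Rmult_1_l; auto].
    - destruct IHn0 as [H1 H2]. split; auto.
      rewrite cheb_SS, H2, H1.
      replace (INR (S (S n0)) * th) with (INR (S n0) * th + th) by (rewrite !S_INR; ring).
      replace (INR n0 * th) with (INR (S n0) * th - th) by (rewrite !S_INR; ring).
      rewrite cos_plus, cos_minus. ring. }
  apply H.
Qed.

Lemma cheb_lead n : lead_poly n (2 ^ n) (cheb (S n)).
Proof.
  assert (H : forall n, lead_poly n (2 ^ n) (cheb (S n)) /\ is_poly n (cheb n)).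
  { induction n0.
    - split.
      + unfold lead_poly. apply (is_poly_ext 0 (fun _ => 0)); [intros; simpl; ring|apply is_poly_const].
      + apply (is_poly_ext 0 (fun _ => 1)); [intros; simpl; auto|apply is_poly_const].
    - destruct IHn0 as [H1 H2]. split.
      + unfold lead_poly in *.
        apply (is_poly_ext (S n0) (fun x => 2 * (x * (cheb (S n0) x - 2 ^ n0 * x ^ S n0)) + (- cheb n0 x))).
        * intros x. rewrite cheb_SS. simpl. ring.
        * apply is_poly_add; [apply is_poly_scal, is_poly_mulx; auto|].
          apply is_poly_opp. apply is_poly_mono with n0; auto.
      + apply (is_poly_ext (S n0) (fun x => (cheb (S n0) x - 2 ^ n0 * x ^ S n0) + 2 ^ n0 * x ^ S n0));
          [intros; ring|].
        apply is_poly_add; [apply is_poly_mono with n0; auto|apply is_poly_scal, is_poly_pow]. }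
  apply H.
Qed.

Lemma cheb_abs_le_1 n x : -1 <= x <= 1 -> Rabs (cheb n x) <= 1.
Proof.
  intros Hx. rewrite <- (cos_acos x Hx), cheb_cos. apply Rabs_le. split; [apply COS_bound|apply COS_bound].
Qed.
Lemma cos_npi n : cos (INR n * PI) = (-1) ^ n.
Proof.
  induction n; [simpl; rewrite Rmult_0_l; apply cos_0|].
  rewrite S_INR, Rmult_plus_distr_r, Rmult_1_l, neg_cos, IHn. simpl; ring.
Qed.

Lemma sin_npi n : sin (INR n * PI) = 0.
Proof.
  induction n; [simpl; rewrite Rmult_0_l; apply sin_0|].
  rewrite S_INR, Rmult_plus_distr_r, Rmult_1_l, neg_sin, IHn. ring.
Qed.

Lemma cos_shift_npi x n : cos (x + INR n * PI) = (-1) ^ n * cos x.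
Proof.
  induction n; [simpl; rewrite Rmult_0_l, Rplus_0_r; ring|].
  rewrite S_INR, Rmult_plus_distr_r, Rmult_1_l, <- Rplus_assoc, neg_cos, IHn. simpl; ring.
Qed.

Lemma cos_sum_formula a n :
  2 * sin (a / 2) * sum_f_R0 (fun k => cos (INR k * a)) n =
  sin ((INR n + 1 / 2) * a) + sin (a / 2).
Proof.
  induction n.
  - simpl. rewrite Rmult_0_l, cos_0.
    replace ((0 + 1/2) * a) with (a / 2) by field. ring.
  - cbn [sum_f_R0]. rewrite Rmult_plus_distr_l, IHn.
    replace ((INR (S n) + 1 / 2) * a) with (INR (S n) * a + a / 2) by (rewrite S_INR; field).
    replace ((INR n + 1 / 2) * a) with (INR (S n) * a - a / 2) by (rewrite S_INR; field).
    rewrite sin_plus, sin_minus. ring.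
Qed.

Section Nodes.
Variable s : nat.
Hypothesis hs : (2 <= s)%nat.

Definition cheb_node (k : nat) : R := cos (INR k * PI / INR s).
Definition lim_node (k : nat) : R := sin (INR k * PI / (2 * INR s)) ^ 2.

Lemma INR_s_pos : 0 < INR s.
Proof. apply lt_0_INR; lia. Qed.

Lemma lim_node_cheb_node k : lim_node k = - (1/2) * cheb_node k + 1/2.
Proof.
  unfold lim_node, cheb_node. assert (H := INR_s_pos).
  replace (INR k * PI / INR s) with (2 * (INR k * PI / (2 * INR s))) by (field; lra).
  rewrite cos_2a_sin. field.
Qed.

Lemma lim_node_incr : incr_on lim_node s.
Proof.
  intros j k Hjk Hk. unfold lim_node. assert (Hs := INR_s_pos).
  assert (HPI := PI_RGT_0).
  assert (Hj0 : 0 <= INR j) by apply pos_INR.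
  assert (Hjk' : INR j < INR k) by (apply lt_INR; auto).
  assert (Hks : INR k <= INR s) by (apply le_INR; auto).
  assert (A1 : 0 <= INR j * PI / (2 * INR s)).
  { apply Rmult_le_pos; [apply Rmult_le_pos; lra|]. left; apply Rinv_0_lt_compat; lra. }
  assert (A2 : INR k * PI / (2 * INR s) <= PI / 2).
  { apply (Rmult_le_reg_r (2 * INR s)); [lra|]. field_simplify; [|lra]. nra. }
  assert (A3 : INR j * PI / (2 * INR s) < INR k * PI / (2 * INR s)).
  { apply Rmult_lt_compat_r; [apply Rinv_0_lt_compat; lra|]. nra. }
  assert (S1 : sin (INR j * PI / (2 * INR s)) < sin (INR k * PI / (2 * INR s))).
  { apply sin_increasing_1; lra. }
  assert (S0 : 0 <= sin (INR j * PI / (2 * INR s))).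
  { apply sin_ge_0; lra. }
  simpl. nra.
Qed.

Lemma lim_node_range k : 0 <= lim_node k <= 1.
Proof.
  unfold lim_node. assert (H := SIN_bound (INR k * PI / (2 * INR s))). simpl. nra.
Qed.

(* [x_lim] are the trapezoidal weights on the Chebyshev-Lobatto nodes [cheb_node]; they
   integrate [cos (m theta)] exactly for [0 < m < 2 s], whence the moments below. *)
Definition lim_alt_sum (q : R -> R) : R :=
  sum_f_R0 (fun k => (-1) ^ k * x_lim s k * q (cheb_node k)) s.

Lemma x_lim_sum : sum_f_R0 (x_lim s) s = 2.
Proof.
  unfold x_lim. assert (H := INR_s_pos).
  rewrite (sum_eq _ (fun k => 2 / INR s + (- (if Nat.eqb k 0 then 1 / INR s else 0))
                                      + (- (if Nat.eqb k s then 1 / INR s else 0)))) by (intros; ring).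
  rewrite !plus_sum, !sum_opp, sum_cte, sum_if_eq, sum_if_eq by lia.
  rewrite S_INR. field. lra.
Qed.

Lemma lim_alt_sum_cheb_low j : (j < s)%nat -> lim_alt_sum (cheb j) = 0.
Proof.
  intros Hj. unfold lim_alt_sum. assert (Hs := INR_s_pos).
  set (a := (INR j + INR s) * PI / INR s).
  assert (E : forall k, (-1) ^ k * cheb j (cheb_node k) = cos (INR k * a)).
  { intros k. unfold cheb_node. rewrite cheb_cos. rewrite <- cos_shift_npi.
    f_equal. unfold a. field. lra. }
  rewrite (sum_eq _ (fun k => 2 / INR s * cos (INR k * a)
             + (- (if Nat.eqb k 0 then 1 / INR s * cos (INR k * a) else 0))
             + (- (if Nat.eqb k s then 1 / INR s * cos (INR k * a) else 0)))).
  2:{ intros k Hk. rewrite <- E. unfold x_lim.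
      destruct (Nat.eqb k 0); destruct (Nat.eqb k s); ring. }
  rewrite !plus_sum, !sum_opp, sum_scal, sum_if_eq, sum_if_eq by lia.
  assert (Ha2 : 0 < sin (a / 2)).
  { apply sin_gt_0; unfold a.
    - assert (0 <= INR j) by apply pos_INR. assert (HP := PI_RGT_0).
      apply Rmult_lt_0_compat; [|lra]. apply Rmult_lt_0_compat; [|apply Rinv_0_lt_compat; lra]. nra.
    - assert (INR j < INR s) by (apply lt_INR; auto). assert (HP := PI_RGT_0).
      apply (Rmult_lt_reg_r (2 * INR s)); [lra|]. field_simplify; [nra|lra]. }
  assert (F := cos_sum_formula a s).
  assert (Esa : INR s * a = INR (j + s) * PI) by (unfold a; rewrite plus_INR; field; lra).
  replace ((INR s + 1 / 2) * a) with (INR s * a + a / 2) in F by field.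
  rewrite sin_plus, Esa, sin_npi, cos_npi in F.
  rewrite Esa, cos_npi. simpl (INR 0). rewrite Rmult_0_l, cos_0.
  assert (Hsum : sum_f_R0 (fun k => cos (INR k * a)) s = ((-1) ^ (j + s) + 1) / 2).
  { apply (Rmult_eq_reg_l (2 * sin (a / 2))); [|lra]. rewrite F. field. }
  rewrite Hsum. field. lra.
Qed.

Lemma lim_alt_sum_cheb_top : lim_alt_sum (cheb s) = 2.
Proof.
  unfold lim_alt_sum. rewrite <- x_lim_sum. apply sum_eq. intros k Hk.
  unfold cheb_node. rewrite cheb_cos. assert (Hs := INR_s_pos).
  replace (INR s * (INR k * PI / INR s)) with (INR k * PI) by (field; lra).
  rewrite cos_npi. replace ((-1) ^ k * x_lim s k * (-1) ^ k) with (((-1)^k * (-1)^k) * x_lim s k) by ring.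
  rewrite neg1_pow_sq. ring.
Qed.

Definition lim_signed (k : nat) : R := (-1) ^ k * x_lim s k.

Lemma cheb_node_moments_le : forall i, (i <= s - 1)%nat -> forall i', (i' <= i)%nat ->
  sum_f_R0 (fun k => lim_signed k * cheb_node k ^ i') s = 0.
Proof.
  induction i; intros Hi i' Hi'.
  - assert (i' = 0%nat) by lia; subst.
    rewrite <- (lim_alt_sum_cheb_low 0) by lia. unfold lim_alt_sum, lim_signed. apply sum_eq; intros; simpl; ring.
  - destruct (Nat.eq_dec i' (S i)) as [->|]; [|apply IHi; lia].
    assert (HL := cheb_lead i).
    assert (E := sum_mul_lead_poly lim_signed cheb_node s i (cheb (S i)) (2 ^ i)
                  ltac:(intros i'' Hi''; apply IHi; lia) HL).
    assert (E2 : sum_f_R0 (fun k => lim_signed k * cheb (S i) (cheb_node k)) s = 0).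
    { rewrite <- (lim_alt_sum_cheb_low (S i)) by lia. unfold lim_alt_sum, lim_signed. apply sum_eq; intros; ring. }
    rewrite E2 in E. assert (0 < 2 ^ i) by (apply pow_lt; lra).
    symmetry in E. apply Rmult_integral in E. destruct E; [lra|auto].
Qed.

Lemma cheb_node_moments i : (i <= s - 1)%nat ->
  sum_f_R0 (fun k => lim_signed k * cheb_node k ^ i) s = 0.
Proof. intros; apply (cheb_node_moments_le i); auto. Qed.

Lemma cheb_node_moment_top : sum_f_R0 (fun k => lim_signed k * cheb_node k ^ s) s = 2 / 2 ^ (s - 1).
Proof.
  assert (HL := cheb_lead (s - 1)). replace (S (s - 1)) with s in HL by lia.
  assert (E := sum_mul_lead_poly lim_signed cheb_node s (s - 1) (cheb s) (2 ^ (s - 1))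
                ltac:(intros i' Hi'; apply cheb_node_moments; lia) HL).
  replace (S (s - 1)) with s in E by lia.
  assert (E2 : sum_f_R0 (fun k => lim_signed k * cheb s (cheb_node k)) s = 2).
  { rewrite <- lim_alt_sum_cheb_top. unfold lim_alt_sum, lim_signed. apply sum_eq; intros; ring. }
  rewrite E2 in E. assert (0 < 2 ^ (s - 1)) by (apply pow_lt; lra).
  rewrite E at 1. field. lra.
Qed.

Lemma lim_node_moments i : (i <= s - 1)%nat ->
  sum_f_R0 (fun k => lim_signed k * lim_node k ^ i) s = 0.
Proof.
  intros Hi.
  rewrite (sum_eq _ (fun k => lim_signed k * (fun x => (- (1/2) * x + 1/2) ^ i) (cheb_node k)))
    by (intros; rewrite lim_node_cheb_node; auto).
  apply (sum_mul_poly_eq_0 lim_signed cheb_node s (s - 1) (fun x => (- (1/2) * x + 1/2) ^ i)). { intros; apply cheb_node_moments; auto. }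
  apply is_poly_mono with i; auto. apply is_poly_aff_pow.
Qed.

Lemma lim_node_moment_top : sum_f_R0 (fun k => lim_signed k * lim_node k ^ s) s = (-1) ^ s * 4 / 4 ^ s.
Proof.
  rewrite (sum_eq _ (fun k => lim_signed k * (fun x => (- (1/2) * x + 1/2) ^ S (s - 1)) (cheb_node k)))
    by (intros; rewrite lim_node_cheb_node; replace (S (s - 1)) with s by lia; auto).
  rewrite (sum_mul_lead_poly lim_signed cheb_node s (s - 1) (fun x => (- (1/2) * x + 1/2) ^ S (s - 1)) ((- (1/2)) ^ S (s - 1))).
  - replace (S (s - 1)) with s by lia. rewrite cheb_node_moment_top.
    assert (Es : s = S (s - 1)) by lia. revert Es. generalize (s - 1)%nat. intros m Em. rewrite Em.
    cbn [pow].
    replace (4 ^ m) with (2 ^ m * 2 ^ m) by (rewrite <- Rpow_mult_distr; f_equal; ring).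
    replace ((- (1/2)) ^ m) with ((-1) ^ m / 2 ^ m)
      by (unfold Rdiv; rewrite <- pow_inv, <- Rpow_mult_distr; f_equal; field).
    assert (0 < 2 ^ m) by (apply pow_lt; lra). field. lra.
  - intros; apply cheb_node_moments; lia.
  - apply lead_poly_aff_pow.
Qed.

Lemma x_lim_moment_sys : moment_sys s lim_node (x_lim s).
Proof.
  split; [|split].
  - intros i Hi. rewrite <- (lim_node_moments i) by lia. apply sum_eq; intros; unfold lim_signed; ring.
  - rewrite <- (lim_node_moments 0) by lia. apply sum_eq; intros; unfold lim_signed; simpl; ring.
  - apply x_lim_sum.
Qed.

Lemma weight_total_lim_node : weight_total lim_node s = 2 * 4 ^ s / 4.
Proof.
  destruct (moment_sys_unique lim_node s (x_lim s) ltac:(lia) lim_node_incr x_lim_moment_sys) as [_ H].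
  rewrite (sum_eq _ (fun k => lim_signed k * lim_node k ^ s)) in H by (intros; unfold lim_signed; ring).
  rewrite lim_node_moment_top in H.
  set (W := weight_total lim_node s) in *. set (e := (-1) ^ s) in *.
  assert (HW : 0 < W) by apply weight_total_pos, lim_node_incr.
  assert (HP : 0 < 4 ^ s) by (apply pow_lt; lra).
  assert (He : e * e = 1) by apply neg1_pow_sq.
  assert (H' : e * (e * 4 / 4 ^ s) * (4 ^ s * W) = e * (2 * e / W) * (4 ^ s * W)) by (rewrite H; reflexivity).
  replace (e * (e * 4 / 4 ^ s) * (4 ^ s * W)) with (e * e * 4 * W) in H' by (field; lra).
  replace (e * (2 * e / W) * (4 ^ s * W)) with (e * e * 2 * 4 ^ s) in H' by (field; lra).
  rewrite He in H'. lra.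
Qed.

Lemma x_lim_moment_sol k : (k <= s)%nat -> x_lim s k = moment_sol lim_node s k.
Proof.
  intros Hk. apply (moment_sys_unique lim_node s (x_lim s) ltac:(lia) lim_node_incr x_lim_moment_sys); auto.
Qed.

End Nodes.
Lemma eventually_forall_le (P : nat -> nat -> Prop) n :
  (forall k, (k <= n)%nat -> exists N, forall M, (N <= M)%nat -> P M k) ->
  exists N, forall M, (N <= M)%nat -> forall k, (k <= n)%nat -> P M k.
Proof.
  induction n; intros H.
  - destruct (H 0%nat (le_n _)) as [N HN]. exists N. intros M HM k Hk.
    assert (k = 0%nat) by lia; subst; auto.
  - destruct IHn as [N1 H1]; [intros; apply H; lia|].
    destruct (H (S n) (le_n _)) as [N2 H2]. exists (max N1 N2). intros M HM k Hk.
    destruct (Nat.eq_dec k (S n)) as [->|]; [apply H2; lia|apply H1; lia].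
Qed.

Lemma CV_const (c : R) : Un_cv (fun _ => c) c.
Proof. intros eps Heps. exists 0%nat. intros. unfold R_dist. rewrite Rminus_diag, Rabs_R0. auto. Qed.

Lemma CV_inv (u : nat -> R) l : l <> 0 -> Un_cv u l -> Un_cv (fun n => / u n) (/ l).
Proof.
  intros Hl H eps Heps.
  assert (Hal : 0 < Rabs l) by (apply Rabs_pos_lt; auto).
  destruct (H (Rabs l / 2)) as [N1 H1]; [lra|].
  destruct (H (eps * (Rabs l * Rabs l) / 2)) as [N2 H2].
  { apply Rmult_lt_0_compat; [apply Rmult_lt_0_compat; auto; nra|lra]. }
  exists (max N1 N2). intros n Hn.
  specialize (H1 n ltac:(lia)). specialize (H2 n ltac:(lia)). unfold R_dist in *.
  assert (Hu : Rabs l / 2 < Rabs (u n)).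
  { assert (Rabs l <= Rabs (u n) + Rabs (u n - l)).
    { replace l with (u n - (u n - l)) at 1 by ring. apply Rabs_triang_inv2 || idtac.
      eapply Rle_trans; [apply Rabs_triang|]. rewrite Rabs_Ropp. lra. }
    lra. }
  assert (Hun : u n <> 0) by (intro Z; rewrite Z, Rabs_R0 in Hu; lra).
  replace (/ u n - / l) with ((l - u n) / (u n * l)) by (field; auto).
  unfold Rdiv. rewrite Rabs_mult, Rabs_inv, Rabs_mult.
  rewrite <- Rabs_Ropp. replace (- (l - u n)) with (u n - l) by ring.
  apply (Rmult_lt_reg_r (Rabs (u n) * Rabs l)); [nra|].
  rewrite Rmult_assoc, Rinv_l by (apply Rgt_not_eq; nra). rewrite Rmult_1_r.
  apply Rlt_le_trans with (eps * (Rabs l * Rabs l) / 2); auto.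
  assert (0 < eps * Rabs l) by nra. nra.
Qed.

Lemma CV_sum (f : nat -> nat -> R) (l : nat -> R) N :
  (forall k, (k <= N)%nat -> Un_cv (fun M => f M k) (l k)) ->
  Un_cv (fun M => sum_f_R0 (f M) N) (sum_f_R0 l N).
Proof.
  induction N; intros H; simpl; [apply H; lia|].
  apply CV_plus; [apply IHN; intros; apply H; lia|apply H; lia].
Qed.

Lemma CV_prod (f : nat -> nat -> R) (l : nat -> R) N :
  (forall k, (k <= N)%nat -> Un_cv (fun M => f M k) (l k)) ->
  Un_cv (fun M => prod_f_R0 (f M) N) (prod_f_R0 l N).
Proof.
  induction N; intros H; simpl; [apply H; lia|].
  apply CV_mult; [apply IHN; intros; apply H; lia|apply H; lia].
Qed.

Definition nk_separated (s M : nat) : Prop :=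
  forall k, (k < s)%nat -> (nk s M k + 3 < nk s M (S k))%nat.

Section Finite.
Variable s : nat.
Hypothesis hs : (2 <= s)%nat.

Definition nodeR (M : nat) (k : nat) : R := INR (nk s M k).

Lemma nk_bounds M k : INR M * lim_node s k - 1 < nodeR M k <= INR M * lim_node s k.
Proof.
  unfold nodeR, nk. fold (lim_node s k).
  set (r := INR M * lim_node s k).
  assert (Hr : 0 <= r) by (apply Rmult_le_pos; [apply pos_INR|apply lim_node_range]).
  destruct (base_Int_part r) as [H1 H2].
  assert (Hz : (0 <= Int_part r)%Z).
  { assert (-1 < IZR (Int_part r)) by lra.
    apply lt_IZR in H. lia. }
  rewrite INR_IZR_INZ, Z2Nat.id by auto. lra.
Qed.

Lemma nk_le_M M k : (nk s M k <= M)%nat.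
Proof.
  apply INR_le. destruct (nk_bounds M k) as [_ H]. unfold nodeR in H.
  assert (H1 := lim_node_range s k). assert (0 <= INR M) by apply pos_INR. nra.
Qed.

Lemma nk_separated_eventually : exists N, forall M, (N <= M)%nat -> nk_separated s M.
Proof.
  destruct (eventually_forall_le (fun M k => (k < s)%nat -> (nk s M k + 3 < nk s M (S k))%nat) s) as [N HN].
  - intros k Hk. destruct (Nat.lt_ge_cases k s) as [Hks|Hks].
    + assert (Hd : 0 < lim_node s (S k) - lim_node s k)
        by (apply Rlt_0_minus, lim_node_incr; auto; lia).
      destruct (INR_archimed (lim_node s (S k) - lim_node s k) 4 Hd) as [N HN].
      exists N. intros M HM _.
      assert (INR N <= INR M) by (apply le_INR; auto).
      destruct (nk_bounds M k) as [_ A]. destruct (nk_bounds M (S k)) as [B _].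
      unfold nodeR in *.
      assert (INR (nk s M k) + 3 < INR (nk s M (S k))) by nra.
      apply INR_lt. rewrite plus_INR. simpl (INR 3). lra.
    + exists 0%nat. intros; lia.
  - exists N. intros M HM k Hk. apply (HN M HM k); auto; lia.
Qed.

Lemma nodeR_incr M : nk_separated s M -> incr_on (nodeR M) s.
Proof.
  intros H j k Hjk Hk. unfold nodeR. apply lt_INR.
  induction k; [lia|].
  destruct (Nat.eq_dec j k) as [->|]; [specialize (H k ltac:(lia)); lia|].
  specialize (IHk ltac:(lia) ltac:(lia)). specialize (H k ltac:(lia)). lia.
Qed.

Definition rel_node (M : nat) (k : nat) : R := nodeR M k / INR M.

Lemma rel_node_cv k : Un_cv (fun M => rel_node M k) (lim_node s k).
Proof.
  intros eps Heps. destruct (INR_archimed eps 1 Heps) as [N HN].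
  exists (S N). intros M HM. unfold R_dist, rel_node.
  assert (HMp : 0 < INR M) by (apply lt_0_INR; lia).
  assert (INR (S N) <= INR M) by (apply le_INR; auto). rewrite S_INR in H.
  destruct (nk_bounds M k) as [A B].
  replace (nodeR M k / INR M - lim_node s k) with ((nodeR M k - INR M * lim_node s k) / INR M) by (field; lra).
  unfold Rdiv. rewrite Rabs_mult, Rabs_inv, (Rabs_pos_eq (INR M)) by lra.
  apply (Rmult_lt_reg_r (INR M)); auto. rewrite Rmult_assoc, Rinv_l, Rmult_1_r by lra.
  apply Rle_lt_trans with 1.
  - rewrite Rabs_left1 by lra. lra.
  - nra.
Qed.

Lemma nodeR_rel_node M : (1 <= M)%nat -> forall k, nodeR M k = INR M * rel_node M k.
Proof.
  intros HM k. unfold rel_node. assert (0 < INR M) by (apply lt_0_INR; lia). field. lra.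
Qed.

Lemma node_prod_cv k : Un_cv (fun M => node_prod (rel_node M) s k) (node_prod (lim_node s) s k).
Proof.
  unfold node_prod. apply (CV_prod (fun M j => if Nat.eqb j k then 1 else rel_node M k - rel_node M j)
                               (fun j => if Nat.eqb j k then 1 else lim_node s k - lim_node s j)).
  intros j Hj. destruct (Nat.eqb j k); [apply CV_const|].
  apply CV_minus; apply rel_node_cv.
Qed.

Lemma alt_weight_cv k : (k <= s)%nat ->
  Un_cv (fun M => alt_weight (rel_node M) s k) (alt_weight (lim_node s) s k).
Proof.
  intros Hk. unfold alt_weight, dd_weight.
  apply CV_mult; [apply CV_const|]. apply CV_inv; [|apply node_prod_cv].
  apply node_prod_neq_0; auto. apply incr_on_inj, lim_node_incr; auto.
Qed.

Lemma weight_total_cv : Un_cv (fun M => weight_total (rel_node M) s) (weight_total (lim_node s) s).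
Proof.
  unfold weight_total. apply (CV_sum (fun M => alt_weight (rel_node M) s) (alt_weight (lim_node s) s)).
  intros; apply alt_weight_cv; auto.
Qed.

Lemma moment_sol_cv k : (k <= s)%nat -> Un_cv (fun M => moment_sol (rel_node M) s k) (x_lim s k).
Proof.
  intros Hk. rewrite x_lim_moment_sol by auto. unfold moment_sol, Rdiv.
  apply CV_mult; [apply CV_mult; [apply CV_const|apply alt_weight_cv; auto]|].
  apply CV_inv; [|apply weight_total_cv].
  assert (0 < weight_total (lim_node s) s) by (apply weight_total_pos, lim_node_incr; auto). lra.
Qed.

Lemma rel_node_incr M : (1 <= M)%nat -> nk_separated s M -> incr_on (rel_node M) s.
Proof.
  intros HM Hg j k Hjk Hk. unfold rel_node. assert (0 < INR M) by (apply lt_0_INR; lia).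
  apply Rmult_lt_compat_r; [apply Rinv_0_lt_compat; auto|]. apply nodeR_incr; auto.
Qed.

Lemma nodeR_scale M : (1 <= M)%nat -> nodeR M = (fun j => INR M * rel_node M j).
Proof. intros HM. apply functional_extensionality. intros k. apply nodeR_rel_node; auto. Qed.

End Finite.
Definition gen_diag (l : nat) (m : R) : R :=
  match l with
  | O => 1
  | 1%nat => 0
  | 2%nat => 0
  | S (S (S q)) => m ^ S q
  end.

Lemma gen_entry_far M l i j : (i <= M)%nat -> (j <= M)%nat -> j <> S i -> i <> S j ->
  gen M l i j = if Nat.eqb i j then RtoC (gen_diag l (INR i)) else RtoC 0.
Proof.
  intros Hi Hj H1 H2.
  destruct l as [|[|[|q]]].
  - change (gen M 0 i j) with (mid i j). unfold mid. destruct (Nat.eqb i j); reflexivity.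
  - change (gen M 1 i j) with (madd ann adag i j). unfold madd, adag. rewrite (ann_neq i j), (ann_neq j i) by auto.
    destruct (Nat.eqb i j); apply cplx_eq; simpl; ring.
  - change (gen M 2 i j) with (mscale Ci (msub ann adag) i j). unfold mscale, msub, adag. rewrite (ann_neq i j), (ann_neq j i) by auto.
    destruct (Nat.eqb i j); apply cplx_eq; simpl; ring.
  - change (gen M (S (S (S q))) i j) with (mpow M (numop M) (S q) i j).
    rewrite numop_pow_diag by auto. unfold diag_mat. reflexivity.
Qed.

Definition gen_poly (s : nat) (c : nat -> R) (m : R) : R :=
  sum_f_R0 (fun l => c l * gen_diag l m) (s + 1).

Lemma Csum_mul_RtoC (c : nat -> R) (f : nat -> cplx) n :
  (forall l, (l <= n)%nat -> snd (f l) = 0) ->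
  Csum (fun l => Cmul (RtoC (c l)) (f l)) n = RtoC (sum_f_R0 (fun l => c l * fst (f l)) n).
Proof.
  intros H. unfold Csum, RtoC, Cmul. simpl. f_equal.
  - apply sum_eq; intros; rewrite H by auto; ring.
  - apply sum_eq_R0; intros; rewrite H by auto; ring.
Qed.

Lemma in_S_entry M s c i j : (i <= M)%nat -> (j <= M)%nat -> j <> S i -> i <> S j ->
  Csum (fun l => Cmul (RtoC (c l)) (gen M l i j)) (s + 1) =
  if Nat.eqb i j then RtoC (gen_poly s c (INR i)) else RtoC 0.
Proof.
  intros Hi Hj H1 H2.
  rewrite (Csum_eq _ (fun l => Cmul (RtoC (c l)) (if Nat.eqb i j then RtoC (gen_diag l (INR i)) else RtoC 0)))
    by (intros; rewrite gen_entry_far; auto).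
  rewrite Csum_mul_RtoC by (intros; destruct (Nat.eqb i j); reflexivity).
  unfold gen_poly. destruct (Nat.eqb i j); simpl; auto. f_equal. apply sum_eq_R0; intros; ring.
Qed.

Lemma in_S_diag M s c i : (i <= M)%nat ->
  Csum (fun l => Cmul (RtoC (c l)) (gen M l i i)) (s + 1) = RtoC (gen_poly s c (INR i)).
Proof. intros Hi. rewrite in_S_entry by (auto; lia). rewrite Nat.eqb_refl. auto. Qed.

Lemma gen_diag_is_poly s l : (2 <= s)%nat -> (l <= s + 1)%nat -> is_poly (s - 1) (gen_diag l).
Proof.
  intros Hs Hl. destruct l as [|[|[|q]]]; simpl gen_diag.
  - apply is_poly_const.
  - apply is_poly_const.
  - apply is_poly_const.
  - apply is_poly_mono with (S q); [lia|]. apply is_poly_pow.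
Qed.

Lemma gen_poly_is_poly s c : (2 <= s)%nat -> is_poly (s - 1) (gen_poly s c).
Proof.
  intros Hs. unfold gen_poly. apply (is_poly_sum (s - 1) (fun l m => c l * gen_diag l m)).
  intros; apply is_poly_scal, gen_diag_is_poly; auto.
Qed.

Definition gen_coeffs (b : nat -> R) (l : nat) : R :=
  match l with
  | O => b O
  | 1%nat => 0
  | 2%nat => 0
  | S (S (S q)) => b (S q)
  end.

Lemma gen_poly_coeffs s b m : (2 <= s)%nat ->
  gen_poly s (gen_coeffs b) m = sum_f_R0 (fun i => b i * m ^ i) (s - 1).
Proof.
  intros Hs. unfold gen_poly.
  replace (s + 1)%nat with (S (S (S (s - 2)))) by lia.
  replace (s - 1)%nat with (S (s - 2)) by lia.
  rewrite !sum_first. simpl gen_coeffs. simpl gen_diag. ring_simplify.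
  f_equal.
Qed.

Lemma mmul_real_left M (P X : mat) (p : nat -> nat -> R) i j :
  (forall i a, P i a = RtoC (p i a)) ->
  mmul M P X i j =
  (sum_f_R0 (fun a => p i a * fst (X a j)) M, sum_f_R0 (fun a => p i a * snd (X a j)) M).
Proof.
  intros HP. unfold mmul, Csum. f_equal; apply sum_eq; intros; rewrite HP; simpl; ring.
Qed.

Lemma mmul_real_right M (P X : mat) (p : nat -> nat -> R) a j :
  (forall i a, P i a = RtoC (p i a)) ->
  mmul M X P a j =
  (sum_f_R0 (fun b => fst (X a b) * p b j) M, sum_f_R0 (fun b => snd (X a b) * p b j) M).
Proof.
  intros HP. unfold mmul, Csum. f_equal; apply sum_eq; intros; rewrite HP; simpl; ring.
Qed.

Section Code.
Variables (s M : nat) (x : nat -> R).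
Hypothesis hs : (2 <= s)%nat.
Hypothesis hgap : nk_separated s M.

Notation n := (nk s M).

Lemma nk_sep j k : (j < k)%nat -> (k <= s)%nat -> (n j + 3 < n k)%nat.
Proof.
  intros Hjk Hk. induction k; [lia|].
  destruct (Nat.eq_dec j k) as [->|]; [apply hgap; lia|].
  specialize (IHk ltac:(lia) ltac:(lia)). specialize (hgap k ltac:(lia)). lia.
Qed.

Lemma nk_inj j k : (j <= s)%nat -> (k <= s)%nat -> n j = n k -> j = k.
Proof.
  intros Hj Hk E. destruct (Nat.lt_total j k) as [h|[h|h]]; auto.
  - assert (H := nk_sep j k h Hk); lia.
  - assert (H := nk_sep k j h Hj); lia.
Qed.

Lemma nk_not_adjacent j k : (j <= s)%nat -> (k <= s)%nat -> n j <> S (n k).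
Proof.
  intros Hj Hk E. destruct (Nat.lt_total j k) as [h|[h|h]].
  - assert (H := nk_sep j k h Hk); lia.
  - subst; lia.
  - assert (H := nk_sep k j h Hj); lia.
Qed.

Definition fock_comb (a : nat -> R) (m : nat) : R := sum_f_R0 (fun k => a k * delta m (n k)) s.
Definition amp0 (k : nat) : R := if Nat.even k then sqrt (x k) else 0.
Definition amp1 (k : nat) : R := if Nat.odd k then sqrt (x k) else 0.

Lemma ket0_eq m : ket0 s M x m = RtoC (fock_comb amp0 m).
Proof.
  unfold ket0, fock_comb. rewrite <- Csum_RtoC. apply Csum_eq. intros k Hk.
  unfold amp0. rewrite fock_RtoC. destruct (Nat.even k); apply cplx_eq; simpl; ring.
Qed.

Lemma ket1_eq m : ket1 s M x m = RtoC (fock_comb amp1 m).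
Proof.
  unfold ket1, fock_comb. rewrite <- Csum_RtoC. apply Csum_eq. intros k Hk.
  unfold amp1. rewrite fock_RtoC. destruct (Nat.odd k); apply cplx_eq; simpl; ring.
Qed.

Lemma sum_fock_comb (f : nat -> R) (a : nat -> R) :
  sum_f_R0 (fun b => f b * fock_comb a b) M = sum_f_R0 (fun k => a k * f (n k)) s.
Proof.
  unfold fock_comb.
  rewrite (sum_eq _ (fun b => sum_f_R0 (fun k => a k * (if Nat.eqb b (n k) then f b else 0)) s)).
  - rewrite sum_swap. apply sum_eq. intros k Hk. rewrite sum_scal. f_equal.
    apply sum_if_eq. apply nk_le_M; auto.
  - intros b Hb. rewrite <- sum_scal. apply sum_eq. intros k Hk. unfold delta.
    destruct (Nat.eqb b (n k)); ring.
Qed.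

Lemma fock_comb_node a l : (l <= s)%nat -> fock_comb a (n l) = a l.
Proof.
  intros Hl. unfold fock_comb.
  rewrite (sum_eq _ (fun k => if Nat.eqb k l then a k else 0)).
  - apply sum_if_eq; auto.
  - intros k Hk. unfold delta. destruct (Nat.eqb_spec k l) as [E1|E1]; destruct (Nat.eqb_spec (n l) (n k)) as [E2|E2].
    + ring.
    + subst; tauto.
    + exfalso; apply E1. apply nk_inj; auto.
    + ring.
Qed.

Lemma fock_comb_bilinear (a b d : nat -> R) :
  sum_f_R0 (fun m => fock_comb a m * (d m * fock_comb b m)) M =
  sum_f_R0 (fun k => a k * (b k * d (n k))) s.
Proof.
  rewrite (sum_eq _ (fun m => (d m * fock_comb b m) * fock_comb a m)) by (intros; ring).
  rewrite sum_fock_comb. apply sum_eq. intros k Hk. rewrite fock_comb_node by auto. ring.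
Qed.

Lemma inner_real (u v : vec) (f g : nat -> R) :
  (forall m, u m = RtoC (f m)) -> (forall m, v m = RtoC (g m)) ->
  inner M u v = RtoC (sum_f_R0 (fun m => f m * g m) M).
Proof.
  intros Hu Hv. unfold inner. rewrite <- Csum_RtoC. apply Csum_eq. intros m Hm.
  rewrite Hu, Hv. apply cplx_eq; simpl; ring.
Qed.

Lemma inner_diag (A : mat) (d : nat -> R) (u v : vec) (f g : nat -> R) :
  (forall i j, (i <= M)%nat -> (j <= M)%nat -> A i j = diag_mat d i j) ->
  (forall m, u m = RtoC (f m)) -> (forall m, v m = RtoC (g m)) ->
  inner M u (mapply M A v) = RtoC (sum_f_R0 (fun m => f m * (d m * g m)) M).
Proof.
  intros HA Hu Hv. unfold inner. rewrite <- Csum_RtoC. apply Csum_eq. intros m Hm.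
  rewrite (mapply_diag M A d v m Hm HA). rewrite Hu, Hv. apply cplx_eq; simpl; ring.
Qed.

Lemma inner_fock_comb (u v : vec) (a b : nat -> R) :
  (forall m, u m = RtoC (fock_comb a m)) -> (forall m, v m = RtoC (fock_comb b m)) ->
  inner M u v = RtoC (sum_f_R0 (fun k => a k * (b k * 1)) s).
Proof.
  intros Hu Hv. rewrite (inner_real u v _ _ Hu Hv), <- (fock_comb_bilinear a b (fun _ => 1)).
  f_equal. apply sum_eq; intros; ring.
Qed.

Lemma inner_diag_fock_comb (A : mat) (d : nat -> R) (u v : vec) (a b : nat -> R) :
  (forall i j, (i <= M)%nat -> (j <= M)%nat -> A i j = diag_mat d i j) ->
  (forall m, u m = RtoC (fock_comb a m)) -> (forall m, v m = RtoC (fock_comb b m)) ->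
  inner M u (mapply M A v) = RtoC (sum_f_R0 (fun k => a k * (b k * d (n k))) s).
Proof. intros HA Hu Hv. rewrite (inner_diag A d u v _ _ HA Hu Hv). f_equal. apply fock_comb_bilinear. Qed.

Lemma amp0_amp1_pair (g : nat -> R) : sum_f_R0 (fun k => amp0 k * (amp1 k * g k)) s = 0.
Proof.
  apply sum_eq_R0. intros k _. unfold amp0, amp1. rewrite <- Nat.negb_even.
  destruct (Nat.even k); simpl; ring.
Qed.

Lemma amp1_amp0_pair (g : nat -> R) : sum_f_R0 (fun k => amp1 k * (amp0 k * g k)) s = 0.
Proof. rewrite <- (amp0_amp1_pair g). apply sum_eq. intros; ring. Qed.

Hypothesis hx : forall k, (k <= s)%nat -> 0 <= x k.

(* [amp0 k ^ 2 = (1 + (-1) ^ k) x k / 2] and [amp1 k ^ 2 = (1 - (-1) ^ k) x k / 2] *)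
Lemma amp0_pair (g : nat -> R) :
  sum_f_R0 (fun k => amp0 k * (amp0 k * g k)) s =
  (sum_f_R0 (fun k => x k * g k) s + sum_f_R0 (fun k => (-1) ^ k * x k * g k) s) / 2.
Proof.
  rewrite <- plus_sum. unfold Rdiv. rewrite Rmult_comm, <- sum_scal. apply sum_eq. intros k Hk.
  unfold amp0. rewrite neg1_pow_even. destruct (Nat.even k); [|field].
  rewrite <- Rmult_assoc, sqrt_sqrt by auto. field.
Qed.

Lemma amp1_pair (g : nat -> R) :
  sum_f_R0 (fun k => amp1 k * (amp1 k * g k)) s =
  (sum_f_R0 (fun k => x k * g k) s - sum_f_R0 (fun k => (-1) ^ k * x k * g k) s) / 2.
Proof.
  rewrite <- minus_sum. unfold Rdiv. rewrite Rmult_comm, <- sum_scal. apply sum_eq. intros k Hk.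
  unfold amp1. rewrite neg1_pow_even, <- Nat.negb_even. destruct (Nat.even k); simpl; [field|].
  rewrite <- Rmult_assoc, sqrt_sqrt by auto. field.
Qed.

Lemma sig_diff_moment :
  sig_diff s M x = sum_f_R0 (fun k => (-1) ^ k * x k * INR (n k) ^ s) s.
Proof.
  assert (HA : forall i j, (i <= M)%nat -> (j <= M)%nat ->
     mpow M (numop M) s i j = diag_mat (fun m => INR m ^ s) i j) by (intros; apply numop_pow_diag; auto).
  unfold sig_diff, expval.
  rewrite (inner_diag_fock_comb _ _ _ _ amp0 amp0 HA ket0_eq ket0_eq),
          (inner_diag_fock_comb _ _ _ _ amp1 amp1 HA ket1_eq ket1_eq).
  simpl fst. rewrite amp0_pair, amp1_pair. field.
Qed.

Hypothesis hmom : forall i, (i <= s - 1)%nat ->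
  sum_f_R0 (fun k => (-1) ^ k * x k * INR (n k) ^ i) s = 0.
Hypothesis hmass : sum_f_R0 x s = 2.

Lemma code_moment_poly (p : R -> R) : is_poly (s - 1) p ->
  sum_f_R0 (fun k => (-1) ^ k * x k * p (INR (n k))) s = 0.
Proof.
  intros Hp. apply (sum_mul_poly_eq_0 (fun k => (-1) ^ k * x k) (fun k => INR (n k)) s (s - 1)); auto.
Qed.

Lemma code_moment_const (c : R) : sum_f_R0 (fun k => (-1) ^ k * x k * c) s = 0.
Proof. apply (code_moment_poly (fun _ => c)), is_poly_const. Qed.

Lemma code_mass_const (c : R) : sum_f_R0 (fun k => x k * c) s = 2 * c.
Proof. rewrite <- hmass, Rmult_comm, scal_sum. reflexivity. Qed.

Lemma ket0_norm : inner M (ket0 s M x) (ket0 s M x) = RtoC 1.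
Proof.
  rewrite (inner_fock_comb _ _ amp0 amp0 ket0_eq ket0_eq), amp0_pair.
  rewrite code_mass_const, code_moment_const. f_equal. field.
Qed.

Lemma ket1_norm : inner M (ket1 s M x) (ket1 s M x) = RtoC 1.
Proof.
  rewrite (inner_fock_comb _ _ amp1 amp1 ket1_eq ket1_eq), amp1_pair.
  rewrite code_mass_const, code_moment_const. f_equal. field.
Qed.

Lemma ket0_ket1_orth : inner M (ket0 s M x) (ket1 s M x) = RtoC 0.
Proof. rewrite (inner_fock_comb _ _ amp0 amp1 ket0_eq ket1_eq), amp0_amp1_pair. reflexivity. Qed.

Lemma ket0_numop_pow_ket1 :
  inner M (ket0 s M x) (mapply M (mpow M (numop M) s) (ket1 s M x)) = RtoC 0.
Proof.
  rewrite (inner_diag_fock_comb _ (fun m => INR m ^ s) _ _ amp0 amp1) by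
    (apply ket0_eq || apply ket1_eq || (intros; apply numop_pow_diag; auto)).
  rewrite amp0_amp1_pair. reflexivity.
Qed.

Definition proj_entry (i j : nat) : R :=
  fock_comb amp0 i * fock_comb amp0 j + fock_comb amp1 i * fock_comb amp1 j.

Lemma projP_entry i j : projP s M x i j = RtoC (proj_entry i j).
Proof.
  unfold projP, madd, outer, proj_entry. rewrite !ket0_eq, !ket1_eq. apply cplx_eq; simpl; ring.
Qed.

Lemma sandwich_entry (B : nat -> nat -> R) (al : nat -> R) i j :
  (forall k l, (k <= s)%nat -> (l <= s)%nat -> B (n l) (n k) = if Nat.eqb k l then al l else 0) ->
  sum_f_R0 (fun a => proj_entry i a * sum_f_R0 (fun b => B a b * proj_entry b j) M) M =
  fock_comb amp0 i * (fock_comb amp0 j * sum_f_R0 (fun l => amp0 l * (amp0 l * al l)) s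
             + fock_comb amp1 j * sum_f_R0 (fun l => amp0 l * (amp1 l * al l)) s) +
  fock_comb amp1 i * (fock_comb amp0 j * sum_f_R0 (fun l => amp1 l * (amp0 l * al l)) s
             + fock_comb amp1 j * sum_f_R0 (fun l => amp1 l * (amp1 l * al l)) s).
Proof.
  intros HB.
  set (Z := fun (bet : nat -> R) (a : nat) => sum_f_R0 (fun k => bet k * B a (n k)) s).
  assert (E1 : forall a, sum_f_R0 (fun b => B a b * proj_entry b j) M = fock_comb amp0 j * Z amp0 a + fock_comb amp1 j * Z amp1 a).
  { intros a. unfold Z. rewrite <- (sum_fock_comb (B a) amp0), <- (sum_fock_comb (B a) amp1).
    rewrite <- !sum_scal, <- plus_sum. apply sum_eq; intros; unfold proj_entry; ring. }
  rewrite (sum_eq _ (fun a => fock_comb amp0 i * (fock_comb amp0 a * (fock_comb amp0 j * Z amp0 a + fock_comb amp1 j * Z amp1 a))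
                             + fock_comb amp1 i * (fock_comb amp1 a * (fock_comb amp0 j * Z amp0 a + fock_comb amp1 j * Z amp1 a))))
    by (intros; rewrite E1; unfold proj_entry; ring).
  rewrite plus_sum, !sum_scal.
  assert (E2 : forall (alp : nat -> R) (Y : nat -> R),
    sum_f_R0 (fun a => fock_comb alp a * Y a) M = sum_f_R0 (fun l => alp l * Y (n l)) s).
  { intros alp Y. rewrite <- (sum_fock_comb Y alp). apply sum_eq; intros; ring. }
  rewrite !E2.
  assert (E3 : forall bet l, (l <= s)%nat -> Z bet (n l) = bet l * al l).
  { intros bet l Hl. unfold Z.
    rewrite (sum_eq _ (fun k => if Nat.eqb k l then bet k * al l else 0)).
    - rewrite sum_if_eq by auto. auto.
    - intros k Hk. rewrite HB by auto. destruct (Nat.eqb k l); ring. }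
  f_equal; f_equal.
  - rewrite (sum_eq _ (fun l => fock_comb amp0 j * (amp0 l * (amp0 l * al l)) + fock_comb amp1 j * (amp0 l * (amp1 l * al l))))
      by (intros; rewrite !E3 by auto; ring).
    rewrite plus_sum, !sum_scal. ring.
  - rewrite (sum_eq _ (fun l => fock_comb amp0 j * (amp1 l * (amp0 l * al l)) + fock_comb amp1 j * (amp1 l * (amp1 l * al l))))
      by (intros; rewrite !E3 by auto; ring).
    rewrite plus_sum, !sum_scal. ring.
Qed.

Lemma in_S_node_entry (c : nat -> R) k l : (k <= s)%nat -> (l <= s)%nat ->
  Csum (fun q => Cmul (RtoC (c q)) (gen M q (n l) (n k))) (s + 1) =
  if Nat.eqb k l then RtoC (gen_poly s c (INR (n l))) else RtoC 0.
Proof.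
  intros Hk Hl.
  rewrite in_S_entry by (apply nk_le_M || apply nk_not_adjacent; auto).
  destruct (Nat.eqb_spec k l) as [->|E1]; [rewrite Nat.eqb_refl; reflexivity|].
  destruct (Nat.eqb_spec (n l) (n k)) as [E2|]; [|reflexivity].
  exfalso. apply E1, nk_inj; auto.
Qed.

Lemma PSP_scalar (Sm : mat) : in_S M s Sm ->
  exists lam : R, mat_eq M (mmul M (projP s M x) (mmul M Sm (projP s M x)))
                          (mscale (RtoC lam) (projP s M x)).
Proof.
  intros [c Hc].
  set (S' := fun i j => Csum (fun l => Cmul (RtoC (c l)) (gen M l i j)) (s + 1)).
  set (al := fun l => gen_poly s c (INR (n l))).
  assert (Hdiag : forall k l, (k <= s)%nat -> (l <= s)%nat ->
     S' (n l) (n k) = if Nat.eqb k l then RtoC (al l) else RtoC 0)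
    by (intros; apply in_S_node_entry; auto).
  (* the moment conditions make [S] act with the same weight on both codewords *)
  assert (Hbal : sum_f_R0 (fun l => amp0 l * (amp0 l * al l)) s =
                 sum_f_R0 (fun l => amp1 l * (amp1 l * al l)) s).
  { rewrite amp0_pair, amp1_pair. unfold al.
    rewrite code_moment_poly by (apply gen_poly_is_poly; auto). field. }
  exists (sum_f_R0 (fun l => amp0 l * (amp0 l * al l)) s). intros i j Hi Hj.
  rewrite (mmul_real_left M _ _ proj_entry) by apply projP_entry.
  unfold mscale. rewrite projP_entry.
  assert (HX : forall a, (a <= M)%nat -> mmul M Sm (projP s M x) a j =
      (sum_f_R0 (fun b => fst (S' a b) * proj_entry b j) M,
       sum_f_R0 (fun b => snd (S' a b) * proj_entry b j) M)).
  { intros a Ha. rewrite (mmul_real_right M _ _ proj_entry) by apply projP_entry.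
    f_equal; apply sum_eq; intros b Hb; rewrite Hc by auto; reflexivity. }
  apply cplx_eq; unfold Cmul, RtoC; cbn [fst snd].
  - rewrite (sum_eq _ (fun a => proj_entry i a * sum_f_R0 (fun b => fst (S' a b) * proj_entry b j) M))
      by (intros a Ha; rewrite HX by auto; reflexivity).
    rewrite (sandwich_entry (fun a b => fst (S' a b)) al)
      by (intros k l Hk Hl; rewrite Hdiag by auto; destruct (Nat.eqb k l); reflexivity).
    rewrite amp0_amp1_pair, amp1_amp0_pair, <- Hbal. unfold proj_entry. ring.
  - rewrite (sum_eq _ (fun a => proj_entry i a * sum_f_R0 (fun b => snd (S' a b) * proj_entry b j) M))
      by (intros a Ha; rewrite HX by auto; reflexivity).
    rewrite (sandwich_entry (fun a b => snd (S' a b)) (fun _ => 0))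
      by (intros k l Hk Hl; rewrite Hdiag by auto; destruct (Nat.eqb k l); reflexivity).
    rewrite !(sum_eq_R0 (fun l => _ * (_ * 0))) by (intros; ring). ring.
Qed.

End Code.
Fixpoint max_abs (d : nat -> R) (n : nat) : R :=
  match n with
  | O => Rabs (d O)
  | S p => Rmax (max_abs d p) (Rabs (d (S p)))
  end.

Lemma max_abs_ge d n k : (k <= n)%nat -> Rabs (d k) <= max_abs d n.
Proof.
  induction n; intros Hk; simpl.
  - assert (k = 0%nat) by lia; subst; lra.
  - destruct (Nat.eq_dec k (S n)) as [->|]; [apply Rmax_r|].
    eapply Rle_trans; [apply IHn; lia|apply Rmax_l].
Qed.

Lemma max_abs_attained d n : exists k, (k <= n)%nat /\ max_abs d n = Rabs (d k).
Proof.
  induction n; simpl; [exists 0%nat; split; auto|].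
  destruct IHn as [k [Hk E]]. unfold Rmax. destruct (Rle_dec (max_abs d n) (Rabs (d (S n)))).
  - exists (S n); split; auto.
  - exists k; split; auto.
Qed.

Lemma max_abs_nonneg d n : 0 <= max_abs d n.
Proof. eapply Rle_trans; [apply Rabs_pos|apply (max_abs_ge d n 0%nat); lia]. Qed.

Lemma max_abs_le d n b : (forall k, (k <= n)%nat -> Rabs (d k) <= b) -> max_abs d n <= b.
Proof.
  destruct (max_abs_attained d n) as [k [Hk E]]. intros H. rewrite E. auto.
Qed.

Lemma max_abs_lipschitz f g n e : (forall k, (k <= n)%nat -> Rabs (f k - g k) <= e) ->
  Rabs (max_abs f n - max_abs g n) <= e.
Proof.
  intros H. apply Rabs_le. split.
  - destruct (max_abs_attained g n) as [k [Hk E]]. rewrite E.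
    assert (A := max_abs_ge f n k Hk). assert (B := H k Hk).
    assert (Rabs (g k) <= Rabs (f k) + Rabs (f k - g k)).
    { replace (g k) with (f k - (f k - g k)) at 1 by ring.
      eapply Rle_trans; [apply Rabs_triang|]. rewrite Rabs_Ropp. lra. }
    lra.
  - destruct (max_abs_attained f n) as [k [Hk E]]. rewrite E.
    assert (A := max_abs_ge g n k Hk). assert (B := H k Hk).
    assert (Rabs (f k) <= Rabs (g k) + Rabs (f k - g k)).
    { replace (f k) with (g k + (f k - g k)) at 1 by ring. apply Rabs_triang. }
    lra.
Qed.

Lemma vnorm_fock M m : (m <= M)%nat -> vnorm M (fock m) = 1.
Proof.
  intros Hm. unfold vnorm.
  rewrite (sum_eq _ (fun i => if Nat.eqb i m then 1 else 0)).
  - rewrite sum_if_eq by auto. apply sqrt_1.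
  - intros i Hi. unfold fock, Cnorm2. destruct (Nat.eqb i m); simpl; ring.
Qed.

Lemma mapply_fock M A m i : (m <= M)%nat -> mapply M A (fock m) i = A i m.
Proof.
  intros Hm. unfold mapply, Csum. apply cplx_eq; simpl.
  - rewrite (sum_eq _ (fun j => if Nat.eqb j m then fst (A i j) else 0)).
    + rewrite sum_if_eq by auto. auto.
    + intros j Hj. unfold fock. destruct (Nat.eqb j m); simpl; ring.
  - rewrite (sum_eq _ (fun j => if Nat.eqb j m then snd (A i j) else 0)).
    + rewrite sum_if_eq by auto. auto.
    + intros j Hj. unfold fock. destruct (Nat.eqb j m); simpl; ring.
Qed.

Lemma Cnorm2_nonneg z : 0 <= Cnorm2 z.
Proof. unfold Cnorm2. simpl. nra. Qed.

Lemma opnorm_diag_entry_le M A r : opnorm M A r -> forall m, (m <= M)%nat -> Rabs (fst (A m m)) <= r.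
Proof.
  intros [Hub _] m Hm.
  assert (H := Hub (vnorm M (mapply M A (fock m))) (ex_intro _ (fock m) (conj (vnorm_fock M m Hm) eq_refl))).
  eapply Rle_trans; [|exact H]. unfold vnorm.
  rewrite <- sqrt_Rsqr_abs. apply sqrt_le_1_alt.
  eapply Rle_trans with (Cnorm2 (A m m)).
  - unfold Cnorm2, Rsqr. simpl. assert (0 <= snd (A m m) * (snd (A m m) * 1)) by nra. nra.
  - rewrite (sum_eq _ (fun i => Cnorm2 (A i m))) by (intros; rewrite mapply_fock; auto).
    apply (sum_term_le (fun i => Cnorm2 (A i m))); auto. intros; apply Cnorm2_nonneg.
Qed.

Lemma opnorm_diag_mat M A d : (forall i j, (i <= M)%nat -> (j <= M)%nat -> A i j = diag_mat d i j) ->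
  opnorm M A (max_abs d M).
Proof.
  intros HA. split.
  - intros y [v [Hv Hy]]. subst y. unfold vnorm in *.
    assert (Hs : sum_f_R0 (fun m => Cnorm2 (v m)) M = 1).
    { assert (0 <= sum_f_R0 (fun m => Cnorm2 (v m)) M) by (apply sum_nonneg; intros; apply Cnorm2_nonneg).
      rewrite <- (sqrt_sqrt (sum_f_R0 (fun m => Cnorm2 (v m)) M)) by auto. rewrite Hv. ring. }
    rewrite <- (sqrt_Rsqr (max_abs d M)) by apply max_abs_nonneg.
    apply sqrt_le_1_alt.
    rewrite (sum_eq _ (fun m => d m * d m * Cnorm2 (v m))).
    2:{ intros m Hm. rewrite (mapply_diag M A d v m Hm HA). unfold Cnorm2, Cmul, RtoC; simpl. ring. }
    replace (Rsqr (max_abs d M)) with (Rsqr (max_abs d M) * sum_f_R0 (fun m => Cnorm2 (v m)) M) by (rewrite Hs; ring).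
    rewrite <- sum_scal. apply sum_Rle. intros m Hm.
    apply Rmult_le_compat_r; [apply Cnorm2_nonneg|].
    assert (H := max_abs_ge d M m Hm). assert (0 <= Rabs (d m)) by apply Rabs_pos.
    unfold Rsqr. replace (d m * d m) with (Rabs (d m) * Rabs (d m)).
    + apply Rmult_le_compat; lra.
    + rewrite <- Rabs_mult. apply Rabs_pos_eq. nra.
  - intros b Hb. destruct (max_abs_attained d M) as [k [Hk E]]. rewrite E.
    apply Hb. exists (fock k). split; [apply vnorm_fock; auto|].
    unfold vnorm.
    rewrite (sum_eq _ (fun i => if Nat.eqb i k then d k * d k else 0)).
    + rewrite sum_if_eq by auto. rewrite <- sqrt_Rsqr_abs. reflexivity.
    + intros i Hi. rewrite mapply_fock, HA by auto. unfold diag_mat, Cnorm2.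
      destruct (Nat.eqb_spec i k); subst; simpl; ring.
Qed.
Lemma Rabs_le_inv a b : Rabs a <= b -> - b <= a <= b.
Proof. unfold Rabs; destruct (Rcase_abs a); intros; lra. Qed.

Definition upd (v : nat -> R) (j : nat) (y : R) : nat -> R :=
  fun i => if Nat.eqb i j then y else v i.
Definition depends_below (d : nat) (G : (nat -> R) -> R) : Prop :=
  forall v v', (forall j, (j < d)%nat -> v j = v' j) -> G v = G v'.
Definition coord_lipschitz (d : nat) (L : R) (G : (nat -> R) -> R) : Prop :=
  forall v j y, (j < d)%nat -> Rabs (G v - G (upd v j y)) <= L * Rabs (v j - y).
Definition in_box (d : nat) (c : nat -> R) (rho : R) (v : nat -> R) : Prop :=
  forall j, (j < d)%nat -> Rabs (v j - c j) <= rho.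

Lemma lipschitz_continuity_pt (f : R -> R) L : 0 <= L ->
  (forall y z, Rabs (f y - f z) <= L * Rabs (y - z)) ->
  forall x, continuity_pt f x.
Proof.
  intros HL H x. unfold continuity_pt, continue_in, limit1_in, limit_in. simpl.
  intros eps Heps. exists (eps / (L + 1)). split.
  - apply Rdiv_lt_0_compat; lra.
  - intros z [_ Hz]. unfold R_dist in *.
    eapply Rle_lt_trans; [apply H|].
    apply Rle_lt_trans with ((L + 1) * Rabs (z - x)).
    + assert (0 <= Rabs (z - x)) by apply Rabs_pos. nra.
    + apply (Rmult_lt_reg_l (/ (L + 1))); [apply Rinv_0_lt_compat; lra|].
      rewrite <- Rmult_assoc, Rinv_l, Rmult_1_l by lra.
      unfold Rdiv in Hz. lra.
Qed.

Lemma upd_upd_same v j y z : forall i, upd (upd v j y) j z i = upd v j z i.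
Proof. intros i; unfold upd; destruct (Nat.eqb i j); auto. Qed.

Lemma upd_comm v j k y z : j <> k -> forall i, upd (upd v j y) k z i = upd (upd v k z) j y i.
Proof.
  intros Hjk i; unfold upd. destruct (Nat.eqb_spec i k); destruct (Nat.eqb_spec i j); subst; auto; lia.
Qed.

Lemma upd_self v j : forall i, upd v j (v j) i = v i.
Proof. intros i; unfold upd. destruct (Nat.eqb_spec i j); subst; auto. Qed.

Section PartialMin.
Variables (d : nat) (G : (nat -> R) -> R) (L : R) (c : nat -> R) (rho : R).
Hypothesis HL : 0 <= L.
Hypothesis Hrho : 0 <= rho.
Hypothesis Hdep : depends_below (S d) G.
Hypothesis Hlip : coord_lipschitz (S d) L G.

Definition last_slice (v : nat -> R) (y : R) : R := G (upd v d y).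

Lemma last_slice_lipschitz v y z : Rabs (last_slice v y - last_slice v z) <= L * Rabs (y - z).
Proof.
  unfold last_slice.
  replace (G (upd v d z)) with (G (upd (upd v d y) d z))
    by (apply Hdep; intros; apply upd_upd_same).
  assert (H := Hlip (upd v d y) d z ltac:(lia)).
  replace (upd v d y d) with y in H by (unfold upd; rewrite Nat.eqb_refl; auto). exact H.
Qed.

Lemma last_slice_min v : exists y, (c d - rho <= y <= c d + rho) /\
  forall z, c d - rho <= z <= c d + rho -> last_slice v y <= last_slice v z.
Proof.
  destruct (continuity_ab_min (last_slice v) (c d - rho) (c d + rho)) as [y [H1 H2]]; [lra| |].
  - intros z _. apply (lipschitz_continuity_pt _ L HL (last_slice_lipschitz v)).
  - exists y; split; auto.
Qed.

Definition last_argmin (v : nat -> R) : R :=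
  proj1_sig (constructive_indefinite_description _ (last_slice_min v)).

Lemma last_argmin_spec v : (c d - rho <= last_argmin v <= c d + rho) /\
  forall z, c d - rho <= z <= c d + rho -> last_slice v (last_argmin v) <= last_slice v z.
Proof. unfold last_argmin. destruct (constructive_indefinite_description _ _). auto. Qed.

Definition partial_min (v : nat -> R) : R := last_slice v (last_argmin v).

Lemma partial_min_depends : depends_below d partial_min.
Proof.
  intros v v' Hvv'.
  assert (E : forall y, last_slice v y = last_slice v' y).
  { intros y. apply Hdep. intros j Hj. unfold upd.
    destruct (Nat.eqb_spec j d); auto. apply Hvv'. lia. }
  unfold partial_min. destruct (last_argmin_spec v) as [A1 A2]. destruct (last_argmin_spec v') as [B1 B2].
  apply Rle_antisym.
  - rewrite <- (E (last_argmin v')). apply A2, B1.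
  - rewrite (E (last_argmin v)). apply B2, A1.
Qed.

(* changing a coordinate [j < d] moves every slice by at most [L |v j - y|], hence also their minima *)
Lemma last_slice_upd v j y z : (j < d)%nat ->
  Rabs (last_slice v z - last_slice (upd v j y) z) <= L * Rabs (v j - y).
Proof.
  intros Hj. unfold last_slice.
  replace (G (upd (upd v j y) d z)) with (G (upd (upd v d z) j y))
    by (apply Hdep; intros i Hi; rewrite upd_comm by lia; auto).
  assert (H := Hlip (upd v d z) j y ltac:(lia)).
  replace (upd v d z j) with (v j) in H by (unfold upd; destruct (Nat.eqb_spec j d); [lia|auto]).
  exact H.
Qed.

Lemma partial_min_lipschitz : coord_lipschitz d L partial_min.
Proof.
  intros v j y Hj. set (v' := upd v j y). unfold partial_min.
  destruct (last_argmin_spec v) as [A1 A2]. destruct (last_argmin_spec v') as [B1 B2].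
  assert (K1 := Rabs_le_inv _ _ (last_slice_upd v j y (last_argmin v) Hj)).
  assert (K2 := Rabs_le_inv _ _ (last_slice_upd v j y (last_argmin v') Hj)).
  assert (K3 := B2 (last_argmin v) A1). assert (K4 := A2 (last_argmin v') B1).
  fold v' in K1, K2. apply Rabs_le. lra.
Qed.

End PartialMin.

(* minimise out the last coordinate and recurse on the partial minimum, again Lipschitz *)
Lemma box_min_exists : forall d (G : (nat -> R) -> R) L c rho, 0 <= L -> 0 <= rho ->
  depends_below d G -> coord_lipschitz d L G ->
  exists vs, in_box d c rho vs /\ forall v, in_box d c rho v -> G vs <= G v.
Proof.
  induction d; intros G L c rho HL Hrho Hdep Hlip.
  - exists c. split; [intros j Hj; lia|]. intros v _. right. apply Hdep. intros; lia.
  - set (am := last_argmin d G L c rho HL Hrho Hdep Hlip).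
    assert (Ham := last_argmin_spec d G L c rho HL Hrho Hdep Hlip).
    destruct (IHd (partial_min d G L c rho HL Hrho Hdep Hlip) L c rho HL Hrho
                  (partial_min_depends d G L c rho HL Hrho Hdep Hlip)
                  (partial_min_lipschitz d G L c rho HL Hrho Hdep Hlip)) as [vs [Hvs Hmin]].
    exists (upd vs d (am vs)). split.
    + intros j Hj. unfold upd. destruct (Nat.eqb_spec j d).
      * subst. destruct (Ham vs) as [Hy _]. apply Rabs_le. unfold am. lra.
      * apply Hvs. lia.
    + intros v Hv. eapply Rle_trans; [apply (Hmin v); intros j Hj; apply Hv; lia|].
      destruct (Ham v) as [_ A2].
      replace (G v) with (last_slice d G v (v d)) by (apply Hdep; intros; apply upd_self).
      apply A2. specialize (Hv d ltac:(lia)). apply Rabs_le_inv in Hv. lra.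
Qed.
Lemma is_poly_prod_aff (a b : nat -> R) j N :
  is_poly (if Nat.leb j N then N else S N)
      (fun x => prod_f_R0 (fun i => if Nat.eqb i j then 1 else a i * x + b i) N).
Proof.
  induction N.
  - destruct (Nat.eqb_spec 0 j); simpl.
    + subst. simpl. apply is_poly_const.
    + destruct j; [lia|]. simpl.
      apply (is_poly_ext 1 (fun x => 1 * (a 0%nat * x + b 0%nat))); [intros; ring|].
      apply (is_poly_mul_aff 0); apply is_poly_const.
  - cbn [prod_f_R0]. destruct (Nat.eqb_spec (S N) j).
    + subst. rewrite Nat.leb_refl. destruct (Nat.leb_spec (S N) N); [lia|].
      apply (is_poly_ext (S N) (fun x => prod_f_R0 (fun i => if Nat.eqb i (S N) then 1 else a i * x + b i) N)).
      { intros; ring. }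
      auto.
    + destruct (Nat.leb_spec j N); destruct (Nat.leb_spec j (S N)); try lia.
      * apply is_poly_mul_aff; auto.
      * apply is_poly_mul_aff; auto.
Qed.

Lemma poly_roots_zero d q (t : nat -> R) : is_poly d q -> inj_on t d ->
  (forall k, (k <= d)%nat -> q (t k) = 0) -> forall x, q x = 0.
Proof.
  intros Hq Ht Hz x.
  destruct (classic (exists k, (k <= d)%nat /\ t k = x)) as [[k [Hk E]]|Hn].
  - subst; auto.
  - set (t' := fun k => if Nat.leb k d then t k else x).
    assert (Hi : inj_on t' (S d)).
    { intros j k Hj Hk Hjk. unfold t'.
      destruct (Nat.leb_spec j d); destruct (Nat.leb_spec k d).
      - apply Ht; auto.
      - intro E; apply Hn; exists j; split; auto.
      - intro E; apply Hn; exists k; split; auto.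
      - lia. }
    assert (E := sum_mul_poly_eq_0 (dd_weight t' (S d)) t' (S d) d q).
    assert (HF : forall i, (i <= d)%nat -> sum_f_R0 (fun k => dd_weight t' (S d) k * t' k ^ i) (S d) = 0).
    { intros i Hi'. fold (dd_moment t' (S d) i). rewrite dd_moment_eq by (auto; lia).
      destruct (Nat.eqb_spec i (S d)); [lia|auto]. }
    specialize (E HF Hq). cbn [sum_f_R0] in E.
    rewrite (sum_eq_R0 (fun k => dd_weight t' (S d) k * q (t' k)) d) in E.
    + replace (t' (S d)) with x in E by (unfold t'; destruct (Nat.leb_spec (S d) d); [lia|auto]).
      assert (Hw : dd_weight t' (S d) (S d) <> 0).
      { unfold dd_weight. apply Rinv_neq_0_compat. apply node_prod_neq_0; auto. }
      rewrite Rplus_0_l in E. apply Rmult_integral in E. destruct E as [E|E]; [contradiction|auto].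
    + intros k Hk. unfold t'. rewrite (proj2 (Nat.leb_le k d) Hk), Hz by auto. ring.
Qed.

Section Deviation.
Variables (s M : nat).
Hypothesis hs : (2 <= s)%nat.

Definition lagrange (j : nat) (x : R) : R :=
  prod_f_R0 (fun i => if Nat.eqb i j then 1 else (x - INR i) / (INR j - INR i)) (s - 1).

Lemma lagrange_node i j : (i <= s - 1)%nat -> (j <= s - 1)%nat ->
  lagrange j (INR i) = if Nat.eqb i j then 1 else 0.
Proof.
  intros Hi Hj. unfold lagrange. destruct (Nat.eqb_spec i j).
  - subst. apply prod_eq_1. intros k Hk. destruct (Nat.eqb_spec k j); auto.
    field. intro E. apply Rminus_diag_uniq in E. apply INR_eq in E. lia.
  - apply (prod_eq_0 _ _ i); auto. rewrite (proj2 (Nat.eqb_neq i j) n). unfold Rdiv. ring.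
Qed.

Lemma lagrange_is_poly j : (j <= s - 1)%nat -> is_poly (s - 1) (lagrange j).
Proof.
  intros Hj. unfold lagrange.
  assert (H := is_poly_prod_aff (fun i => / (INR j - INR i)) (fun i => - INR i / (INR j - INR i)) j (s - 1)).
  rewrite (proj2 (Nat.leb_le j (s - 1)) Hj) in H.
  eapply is_poly_ext; [|exact H]. intros x. apply prod_eq. intros i Hi.
  destruct (Nat.eqb i j); auto. unfold Rdiv. ring.
Qed.

Definition poly_dev (b : nat -> R) : R :=
  max_abs (fun m => INR m ^ s - sum_f_R0 (fun i => b i * INR m ^ i) (s - 1)) M.
Definition lagrange_dev (v : nat -> R) : R :=
  max_abs (fun m => INR m ^ s - sum_f_R0 (fun j => v j * lagrange j (INR m)) (s - 1)) M.

Lemma lagrange_interp (q : R -> R) : is_poly (s - 1) q ->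
  forall x, q x = sum_f_R0 (fun j => q (INR j) * lagrange j x) (s - 1).
Proof.
  intros Hq.
  assert (H := poly_roots_zero (s - 1) (fun x => q x - sum_f_R0 (fun j => q (INR j) * lagrange j x) (s - 1)) INR).
  intros x. apply Rminus_diag_uniq. apply H.
  - apply is_poly_sub; auto. apply (is_poly_sum (s - 1) (fun j x => q (INR j) * lagrange j x)).
    intros; apply is_poly_scal, lagrange_is_poly; auto.
  - intros j k _ _ Hjk E. apply INR_eq in E. auto.
  - intros k Hk.
    rewrite (sum_eq _ (fun j => if Nat.eqb j k then q (INR j) else 0)).
    + rewrite sum_if_eq by auto. ring.
    + intros j Hj. rewrite lagrange_node by auto. destruct (Nat.eqb_spec k j); destruct (Nat.eqb_spec j k); subst; try lia; ring.
Qed.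

Definition lagrange_lip : R :=
  sum_f_R0 (fun m => sum_f_R0 (fun j => Rabs (lagrange j (INR m))) (s - 1)) M.

Lemma lagrange_dev_lipschitz : coord_lipschitz s lagrange_lip lagrange_dev.
Proof.
  intros v j y Hj. unfold lagrange_dev. apply max_abs_lipschitz. intros m Hm.
  replace (INR m ^ s - sum_f_R0 (fun j0 => v j0 * lagrange j0 (INR m)) (s - 1) -
     (INR m ^ s - sum_f_R0 (fun j0 => upd v j y j0 * lagrange j0 (INR m)) (s - 1)))
    with (- sum_f_R0 (fun j0 => if Nat.eqb j0 j then (v j - y) * lagrange j (INR m) else 0) (s - 1)).
  - rewrite Rabs_Ropp, sum_if_eq by lia. rewrite Rabs_mult, Rmult_comm.
    apply Rmult_le_compat_r; [apply Rabs_pos|].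
    unfold lagrange_lip. eapply Rle_trans; [|apply (sum_term_le _ M m); auto; intros; apply sum_nonneg; intros; apply Rabs_pos].
    apply (sum_term_le (fun j0 => Rabs (lagrange j0 (INR m))) (s - 1) j); [intros; apply Rabs_pos|lia].
  - assert (Hd : sum_f_R0 (fun j0 => v j0 * lagrange j0 (INR m)) (s - 1) -
                  sum_f_R0 (fun j0 => upd v j y j0 * lagrange j0 (INR m)) (s - 1) =
                  sum_f_R0 (fun j0 => if Nat.eqb j0 j then (v j - y) * lagrange j (INR m) else 0) (s - 1)).
    { unfold Rminus. rewrite <- sum_opp, <- plus_sum. apply sum_eq. intros i Hi. unfold upd.
      destruct (Nat.eqb_spec i j); subst; ring. }
    rewrite <- Hd. ring.
Qed.

Lemma lagrange_dev_depends : depends_below s lagrange_dev.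
Proof.
  intros v v' H. unfold lagrange_dev. f_equal.
  apply FunctionalExtensionality.functional_extensionality. intros m.
  f_equal. apply sum_eq. intros j Hj. rewrite H by lia. auto.
Qed.

Lemma lagrange_lip_nonneg : 0 <= lagrange_lip.
Proof. unfold lagrange_lip. apply sum_nonneg; intros; apply sum_nonneg; intros; apply Rabs_pos. Qed.

Lemma lagrange_dev_node v j : (j <= s - 1)%nat -> (j <= M)%nat ->
  Rabs (INR j ^ s - v j) <= lagrange_dev v.
Proof.
  intros Hjs HjM.
  assert (H := max_abs_ge (fun m => INR m ^ s - sum_f_R0 (fun i => v i * lagrange i (INR m)) (s - 1)) M j HjM).
  cbv beta in H. rewrite (sum_eq _ (fun i => if Nat.eqb i j then v i else 0)) in H.
  - rewrite sum_if_eq in H by lia. exact H.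
  - intros i Hi. rewrite lagrange_node by lia.
    destruct (Nat.eqb_spec j i); destruct (Nat.eqb_spec i j); subst; try lia; ring.
Qed.

Lemma lagrange_dev_exact : (M < s - 1)%nat -> lagrange_dev (fun j => INR j ^ s) = 0.
Proof.
  intros HM. apply Rle_antisym; [|apply max_abs_nonneg]. unfold lagrange_dev. apply max_abs_le. intros m Hm.
  rewrite (sum_eq _ (fun i => if Nat.eqb i m then INR i ^ s else 0)).
  - rewrite sum_if_eq by lia. rewrite Rminus_diag, Rabs_R0. lra.
  - intros i Hi. rewrite lagrange_node by lia.
    destruct (Nat.eqb_spec m i); destruct (Nat.eqb_spec i m); subst; try lia; ring.
Qed.

(* Outside the box of radius [lagrange_dev c] around the exact values [c j = j ^ s] the
   deviation is at least that of [c] itself, so the minimum over the box is global. *)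
Lemma lagrange_dev_min_exists : exists vs, forall v, lagrange_dev vs <= lagrange_dev v.
Proof.
  set (c := fun j => INR j ^ s).
  set (rho := lagrange_dev c).
  assert (Hrho : 0 <= rho) by apply max_abs_nonneg.
  destruct (box_min_exists s lagrange_dev lagrange_lip c rho lagrange_lip_nonneg Hrho
              lagrange_dev_depends lagrange_dev_lipschitz) as [vs [Hvs Hmin]].
  exists vs. intros v. destruct (classic (in_box s c rho v)) as [Hb|Hb]; [apply Hmin; auto|].
  assert (Hc : lagrange_dev vs <= rho)
    by (apply Hmin; intros j Hj; rewrite Rminus_diag, Rabs_R0; auto).
  destruct (le_lt_dec (s - 1) M) as [HM|HM].
  - apply Rle_trans with rho; [auto|].
    apply NNPP. intro Hlt. apply Hb. intros j Hj.
    assert (H := lagrange_dev_node v j ltac:(lia) ltac:(lia)).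
    rewrite <- Rabs_Ropp. replace (- (v j - c j)) with (INR j ^ s - v j) by (unfold c; ring). lra.
  - unfold rho, c in Hc. rewrite lagrange_dev_exact in Hc by lia.
    apply Rle_trans with 0; [auto|apply max_abs_nonneg].
Qed.

Lemma poly_dev_min_exists : exists bs, forall b, poly_dev bs <= poly_dev b.
Proof.
  destruct lagrange_dev_min_exists as [vs Hvs].
  assert (Hq : is_poly (s - 1) (fun x => sum_f_R0 (fun j => vs j * lagrange j x) (s - 1))).
  { apply (is_poly_sum (s - 1) (fun j x => vs j * lagrange j x)).
    intros; apply is_poly_scal, lagrange_is_poly; auto. }
  destruct Hq as [bs Hbs]. exists bs. intros b.
  replace (poly_dev bs) with (lagrange_dev vs).
  2:{ unfold poly_dev, lagrange_dev. f_equal. apply functional_extensionality. intros m.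
      rewrite Hbs. auto. }
  replace (poly_dev b) with (lagrange_dev (fun j => sum_f_R0 (fun i => b i * INR j ^ i) (s - 1))).
  2:{ unfold poly_dev, lagrange_dev. f_equal. apply functional_extensionality. intros m. f_equal.
      symmetry. apply (lagrange_interp (fun x => sum_f_R0 (fun i => b i * x ^ i) (s - 1))).
      exists b. auto. }
  apply Hvs.
Qed.

End Deviation.
Lemma gen_entry_diagonal M l i j : (i <= M)%nat -> (j <= M)%nat -> l <> 1%nat -> l <> 2%nat ->
  gen M l i j = if Nat.eqb i j then RtoC (gen_diag l (INR i)) else RtoC 0.
Proof.
  intros Hi Hj H1 H2. destruct l as [|[|[|q]]]; try lia.
  - change (gen M 0 i j) with (mid i j). unfold mid. destruct (Nat.eqb i j); reflexivity.
  - change (gen M (S (S (S q))) i j) with (mpow M (numop M) (S q) i j).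
    rewrite numop_pow_diag by auto. unfold diag_mat. reflexivity.
Qed.

Section MinDist.
Variables (s M : nat).
Hypothesis hs : (2 <= s)%nat.

Definition gen_of_poly (b : nat -> R) : mat :=
  fun i j => Csum (fun l => Cmul (RtoC (gen_coeffs b l)) (gen M l i j)) (s + 1).

Lemma gen_of_poly_in_S b : in_S M s (gen_of_poly b).
Proof. exists (gen_coeffs b). intros i j _ _. reflexivity. Qed.

Lemma gen_of_poly_dev_diag b : forall i j, (i <= M)%nat -> (j <= M)%nat ->
  msub (mpow M (numop M) s) (gen_of_poly b) i j =
  diag_mat (fun m => INR m ^ s - sum_f_R0 (fun k => b k * INR m ^ k) (s - 1)) i j.
Proof.
  intros i j Hi Hj. unfold msub. rewrite numop_pow_diag by auto.
  assert (E : gen_of_poly b i j = RtoC (sum_f_R0 (fun l => gen_coeffs b l * (if Nat.eqb i j then gen_diag l (INR i) else 0)) (s + 1))).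
  { unfold gen_of_poly. rewrite <- Csum_RtoC. apply Csum_eq. intros l Hl.
    destruct (Nat.eq_dec l 1) as [->|]; [apply cplx_eq; simpl; ring|].
    destruct (Nat.eq_dec l 2) as [->|]; [apply cplx_eq; simpl; ring|].
    rewrite gen_entry_diagonal by auto. destruct (Nat.eqb i j); apply cplx_eq; simpl; ring. }
  rewrite E. unfold diag_mat. destruct (Nat.eqb_spec i j).
  - fold (gen_poly s (gen_coeffs b) (INR i)). rewrite gen_poly_coeffs by auto. subst. apply cplx_eq; simpl; ring.
  - rewrite sum_eq_R0 by (intros; ring). apply cplx_eq; simpl; ring.
Qed.

Lemma gen_of_poly_opnorm b : opnorm M (msub (mpow M (numop M) s) (gen_of_poly b)) (poly_dev s M b).
Proof. apply opnorm_diag_mat. apply gen_of_poly_dev_diag. Qed.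

Lemma in_S_dist_lower Sm r : in_S M s Sm -> opnorm M (msub (mpow M (numop M) s) Sm) r ->
  exists c, forall m, (m <= M)%nat -> Rabs (INR m ^ s - gen_poly s c (INR m)) <= r.
Proof.
  intros [c Hc] Hr. exists c. intros m Hm.
  assert (H := opnorm_diag_entry_le M _ r Hr m Hm).
  unfold msub in H. rewrite Hc in H by auto. rewrite in_S_diag in H by auto.
  rewrite numop_pow_diag in H by auto. unfold diag_mat in H. rewrite Nat.eqb_refl in H.
  simpl in H. replace (INR m ^ s + - gen_poly s c (INR m)) with (INR m ^ s - gen_poly s c (INR m)) in H by ring.
  auto.
Qed.

Lemma min_dist_exists : exists r, is_min_dist M s r.
Proof.
  destruct (poly_dev_min_exists s M hs) as [bs Hbs]. exists (poly_dev s M bs). split.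
  - exists (gen_of_poly bs). split; [apply gen_of_poly_in_S|apply gen_of_poly_opnorm].
  - intros Sm r' HS Hr'. destruct (in_S_dist_lower Sm r' HS Hr') as [c Hc].
    destruct (gen_poly_is_poly s c hs) as [bc Hbc].
    apply Rle_trans with (poly_dev s M bc); auto.
    unfold poly_dev. apply max_abs_le. intros m Hm. rewrite <- Hbc. auto.
Qed.

Lemma min_dist_le_poly_dev r : is_min_dist M s r -> forall b, r <= poly_dev s M b.
Proof.
  intros [_ H] b. apply (H (gen_of_poly b)); [apply gen_of_poly_in_S|apply gen_of_poly_opnorm].
Qed.

Hypothesis hM : (1 <= M)%nat.

(* [cheb_dev * cheb s (2 m / M - 1)] is monic of degree [s] and bounded by [cheb_dev] on [[0, M]]. *)
Definition cheb_dev : R := 2 * (INR M / 4) ^ s.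

Lemma cheb_poly_coeffs : exists b, forall x,
  x ^ s - sum_f_R0 (fun k => b k * x ^ k) (s - 1) = cheb_dev * cheb s (2 / INR M * x + (-1)).
Proof.
  assert (HMp : 0 < INR M) by (apply lt_0_INR; lia).
  assert (HT := cheb_lead (s - 1)). unfold lead_poly in HT. replace (S (s - 1)) with s in HT by lia.
  assert (H1 := is_poly_comp_aff _ _ (2 / INR M) (-1) HT). cbv beta in H1.
  assert (H2 := lead_poly_aff_pow (s - 1) (2 / INR M) (-1)). unfold lead_poly in H2.
  replace (S (s - 1)) with s in H2 by lia.
  assert (Hk : cheb_dev * 2 ^ (s - 1) * (2 / INR M) ^ s = 1).
  { unfold cheb_dev. assert (Es : s = S (s - 1)) by lia. revert Es. generalize (s - 1)%nat. intros m Em. rewrite Em.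
    replace (2 * (INR M / 4) ^ S m * 2 ^ m * (2 / INR M) ^ S m)
      with ((2 * 2 ^ m) * ((INR M / 4) * (2 / INR M)) ^ S m) by (rewrite Rpow_mult_distr; ring).
    replace (INR M / 4 * (2 / INR M)) with (/ 2) by (field; lra).
    replace (2 * 2 ^ m) with (2 ^ S m) by (simpl; ring).
    rewrite <- Rpow_mult_distr. rewrite Rinv_r by lra. apply pow1. }
  assert (HP : is_poly (s - 1) (fun x => x ^ s - cheb_dev * cheb s (2 / INR M * x + (-1)))).
  { apply (is_poly_ext (s - 1) (fun x => (- cheb_dev) * (cheb s (2 / INR M * x + -1) - 2 ^ (s - 1) * (2 / INR M * x + -1) ^ s)
                                    + (- (cheb_dev * 2 ^ (s - 1))) * ((2 / INR M * x + -1) ^ s - (2 / INR M) ^ s * x ^ s))).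
    - intros x. replace (x ^ s) with ((cheb_dev * 2 ^ (s - 1) * (2 / INR M) ^ s) * x ^ s) at 2 by (rewrite Hk; ring).
      ring.
    - apply is_poly_add; apply is_poly_scal; auto. }
  destruct HP as [b Hb]. exists b. intros x. rewrite <- Hb. ring.
Qed.

Lemma poly_dev_cheb_bound : exists b, poly_dev s M b <= cheb_dev.
Proof.
  destruct cheb_poly_coeffs as [b Hb]. exists b. unfold poly_dev. apply max_abs_le. intros m Hm.
  rewrite Hb. rewrite Rabs_mult.
  assert (HMp : 0 < INR M) by (apply lt_0_INR; lia).
  assert (Hkp : 0 <= cheb_dev) by (unfold cheb_dev; apply Rmult_le_pos; [lra|apply pow_le; lra]).
  rewrite (Rabs_pos_eq cheb_dev Hkp).
  assert (HT : Rabs (cheb s (2 / INR M * INR m + -1)) <= 1).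
  { apply cheb_abs_le_1. assert (0 <= INR m) by apply pos_INR. assert (INR m <= INR M) by (apply le_INR; auto).
    split.
    - assert (0 <= 2 / INR M * INR m) by (apply Rmult_le_pos; [apply Rlt_le, Rdiv_lt_0_compat; lra|lra]). lra.
    - assert (2 / INR M * INR m <= 2).
      { apply (Rmult_le_reg_r (INR M)); auto. field_simplify; lra. }
      lra. }
  nra.
Qed.

Lemma min_dist_le_cheb r : is_min_dist M s r -> r <= cheb_dev.
Proof.
  intros H. destruct poly_dev_cheb_bound as [b Hb]. eapply Rle_trans; [apply (min_dist_le_poly_dev r H b)|auto].
Qed.

End MinDist.
Lemma Rabs_sub_1_squeeze a X eps : a <= X <= 1 -> Rabs (a - 1) < eps -> Rabs (X - 1) < eps.
Proof. intros HX Ha. apply Rabs_def2 in Ha. apply Rabs_def1; lra. Qed.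

Lemma sq_sub_1_bound E d : d <= 1 -> Rabs (E - 1) < d -> Rabs (E ^ 2 - 1) < 3 * d.
Proof. intros Hd HE. apply Rabs_def2 in HE. apply Rabs_def1; nra. Qed.

Lemma Rle_div_of_mul_le a b c : 0 < c -> a * c <= b -> a <= b / c.
Proof.
  intros Hc H. apply (Rmult_le_reg_r c); auto. unfold Rdiv.
  rewrite Rmult_assoc, Rinv_l, Rmult_1_r by lra. auto.
Qed.

Lemma Rdiv_le_of_le_mul a b c : 0 < c -> a <= b * c -> a / c <= b.
Proof.
  intros Hc H. apply (Rmult_le_reg_r c); auto. unfold Rdiv.
  rewrite Rmult_assoc, Rinv_l, Rmult_1_r by lra. auto.
Qed.

Lemma qfi_ratio_bounds K E r eps : 0 < K -> 0 < E -> K * E <= 2 * r -> 2 * r <= K ->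
  Rabs (E ^ 2 - 1) < eps ->
  Rabs (E ^ 2 * K ^ 2 / (4 * r ^ 2) - 1) < eps /\ Rabs (4 * r ^ 2 / K ^ 2 - 1) < eps.
Proof.
  intros HK HE Hlow Hup Heps.
  assert (Hr : 0 < r) by nra.
  assert (A1 : (K * E) ^ 2 <= (2 * r) ^ 2) by (apply pow_incr; nra).
  assert (A2 : (2 * r) ^ 2 <= K ^ 2) by (apply pow_incr; nra).
  assert (HK2 : 0 < K ^ 2) by (apply pow_lt; auto).
  assert (Hr2 : 0 < (2 * r) ^ 2) by (apply pow_lt; lra).
  assert (HE2 : 0 <= E ^ 2) by (apply pow_le; lra).
  split; apply (Rabs_sub_1_squeeze (E ^ 2)); auto; split.
  - apply Rle_div_of_mul_le; [nra|]. replace (4 * r ^ 2) with ((2 * r) ^ 2) by ring. nra.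
  - apply Rdiv_le_of_le_mul; [nra|]. replace (E ^ 2 * K ^ 2) with ((K * E) ^ 2) by ring. nra.
  - apply Rle_div_of_mul_le; [lra|]. replace (4 * r ^ 2) with ((2 * r) ^ 2) by ring. nra.
  - apply Rdiv_le_of_le_mul; [lra|]. replace (4 * r ^ 2) with ((2 * r) ^ 2) by ring. lra.
Qed.

Section Final.
Variable s : nat.
Hypothesis hs : (2 <= s)%nat.

Lemma lin_sys_moment_sys M x : lin_sys s M x -> moment_sys s (nodeR s M) x.
Proof. intros H. exact H. Qed.

Lemma lin_sys_moments M x : lin_sys s M x -> forall i, (i <= s - 1)%nat ->
  sum_f_R0 (fun k => (-1) ^ k * x k * INR (nk s M k) ^ i) s = 0.
Proof.
  intros [H1 [H2 H3]] i Hi. destruct i.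
  - rewrite <- H2. apply sum_eq; intros; simpl; ring.
  - apply H1. lia.
Qed.

Lemma lin_sys_sol M x : nk_separated s M -> lin_sys s M x ->
  forall k, (k <= s)%nat -> x k = moment_sol (nodeR s M) s k.
Proof.
  intros Hg Hx. apply (moment_sys_unique (nodeR s M) s x); auto using lin_sys_moment_sys.
  - lia.
  - apply nodeR_incr; auto.
Qed.

Lemma lin_sys_pos M x : nk_separated s M -> lin_sys s M x -> forall k, (k <= s)%nat -> 0 < x k.
Proof.
  intros Hg Hx k Hk. rewrite (lin_sys_sol M x) by auto.
  apply moment_sol_pos; auto. apply nodeR_incr; auto.
Qed.

Lemma code_properties M : nk_separated s M ->
  (forall k : nat, (k < s)%nat ->
     (nk s M k < nk s M (S k))%nat /\ (nk s M k + 3 <= nk s M (S k))%nat) /\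
  (exists x : nat -> R, lin_sys s M x) /\
  (forall x y : nat -> R, lin_sys s M x -> lin_sys s M y ->
     forall k, (k <= s)%nat -> x k = y k) /\
  (forall x : nat -> R, lin_sys s M x ->
     (forall k, (k <= s)%nat -> 0 < x k) /\
     inner M (ket0 s M x) (ket0 s M x) = RtoC 1 /\
     inner M (ket1 s M x) (ket1 s M x) = RtoC 1 /\
     inner M (ket0 s M x) (ket1 s M x) = RtoC 0 /\
     (forall S : mat, in_S M s S ->
        exists lam : R,
          mat_eq M (mmul M (projP s M x) (mmul M S (projP s M x)))
                   (mscale (RtoC lam) (projP s M x))) /\
     inner M (ket0 s M x) (mapply M (mpow M (numop M) s) (ket1 s M x)) = RtoC 0).
Proof.
  intros Hg. split; [|split; [|split]].
  - intros k Hk. specialize (Hg k Hk). lia.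
  - exists (moment_sol (nodeR s M) s). apply moment_sol_sys; [lia|apply nodeR_incr; auto].
  - intros x y Hx Hy k Hk. rewrite (lin_sys_sol M x), (lin_sys_sol M y); auto.
  - intros x Hx. assert (Hpos := lin_sys_pos M x Hg Hx).
    assert (Hnn : forall k, (k <= s)%nat -> 0 <= x k) by (intros; left; auto).
    assert (Hmom := lin_sys_moments M x Hx). destruct Hx as [_ [_ Hmass]].
    repeat split; auto.
    + apply ket0_norm; auto.
    + apply ket1_norm; auto.
    + apply ket0_ket1_orth; auto.
    + apply PSP_scalar; auto.
    + apply ket0_numop_pow_ket1; auto.
Qed.

Lemma sig_diff_eq M x : nk_separated s M -> lin_sys s M x ->
  sig_diff s M x = 2 * (-1) ^ s / weight_total (nodeR s M) s.
Proof.
  intros Hg Hx. assert (Hpos := lin_sys_pos M x Hg Hx).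
  rewrite sig_diff_moment by (auto; intros; left; auto).
  apply (moment_sys_unique (nodeR s M) s x); auto using lin_sys_moment_sys.
  - lia.
  - apply nodeR_incr; auto.
Qed.

Lemma lin_sys_cv eps : 0 < eps -> exists N, forall M x, (N <= M)%nat -> lin_sys s M x ->
  forall k, (k <= s)%nat -> Rabs (x k - x_lim s k) < eps.
Proof.
  intros Heps. destruct (nk_separated_eventually s hs) as [Ng HNg].
  destruct (eventually_forall_le
              (fun M k => Rabs (moment_sol (rel_node s M) s k - x_lim s k) < eps) s) as [N HN].
  { intros k Hk. exact (moment_sol_cv s hs k Hk eps Heps). }
  exists (max N (max Ng 1)). intros M x HM Hx k Hk.
  assert (Hg : nk_separated s M) by (apply HNg; lia).
  assert (HMpos : 0 < INR M) by (apply lt_0_INR; lia).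
  rewrite (lin_sys_sol M x), nodeR_scale, moment_sol_scale; auto; try lia || lra.
  - apply HN; lia.
  - apply rel_node_incr; auto; lia.
Qed.

Definition signal_scale (M : nat) : R := 4 * (INR M / 4) ^ s.
Definition signal_ratio (M : nat) : R := 2 / (weight_total (rel_node s M) s * (4 / 4 ^ s)).

Lemma signal_ratio_cv : Un_cv signal_ratio 1.
Proof.
  assert (H4 : 0 < 4 ^ s) by (apply pow_lt; lra).
  unfold signal_ratio. unfold Rdiv at 1.
  replace 1 with (2 * / (weight_total (lim_node s) s * (4 / 4 ^ s)))
    by (rewrite weight_total_lim_node by auto; field; lra).
  apply CV_mult; [apply CV_const|]. apply CV_inv.
  - rewrite weight_total_lim_node by auto. apply Rgt_not_eq. unfold Rdiv.
    apply Rmult_lt_0_compat; [nra|]. apply Rmult_lt_0_compat; [lra|apply Rinv_0_lt_compat; lra].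
  - apply CV_mult; [apply weight_total_cv; auto|apply CV_const].
Qed.

Lemma sig_diff_scaled M x : (1 <= M)%nat -> nk_separated s M -> lin_sys s M x ->
  sig_diff s M x = (-1) ^ s * signal_scale M * signal_ratio M.
Proof.
  intros HM Hg Hx. rewrite sig_diff_eq by auto. unfold signal_ratio, signal_scale.
  assert (HMpos : 0 < INR M) by (apply lt_0_INR; lia).
  rewrite (nodeR_scale s hs M HM), weight_total_scale by lra.
  assert (HA := weight_total_pos _ s (rel_node_incr s hs M HM Hg)).
  assert (0 < 4 ^ s) by (apply pow_lt; lra).
  unfold Rdiv. rewrite Rpow_mult_distr, pow_inv.
  field. repeat split; try lra; apply pow_nonzero; lra.
Qed.

Lemma signal_denominator M :
  (-1) ^ s * INR M ^ s * powerRZ 4 (1 - Z.of_nat s) = (-1) ^ s * signal_scale M.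
Proof.
  replace (1 - Z.of_nat s)%Z with (1 + - Z.of_nat s)%Z by lia.
  rewrite powerRZ_add, powerRZ_neg', <- pow_powerRZ by lra. unfold signal_scale, Rdiv.
  rewrite Rpow_mult_distr, pow_inv. simpl powerRZ. ring.
Qed.

Lemma signal_cv eps : 0 < eps -> exists N, forall M x, (N <= M)%nat -> lin_sys s M x ->
  Rabs (sig_diff s M x / ((-1) ^ s * INR M ^ s * powerRZ 4 (1 - Z.of_nat s)) - 1) < eps.
Proof.
  intros Heps. destruct (nk_separated_eventually s hs) as [Ng HNg].
  destruct (signal_ratio_cv eps Heps) as [N HN].
  exists (max N (max Ng 1)). intros M x HM Hx.
  assert (HMpos : 0 < INR M) by (apply lt_0_INR; lia).
  assert (HK : 0 < signal_scale M)
    by (apply Rmult_lt_0_compat; [lra|apply pow_lt, Rdiv_lt_0_compat; lra]).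
  rewrite signal_denominator, sig_diff_scaled by (auto; try apply HNg; lia).
  replace ((-1) ^ s * signal_scale M * signal_ratio M / ((-1) ^ s * signal_scale M))
    with (signal_ratio M) by (field; split; [lra|apply neg1_pow_neq_0]).
  apply HN; lia.
Qed.

Lemma sig_diff_le_min_dist M x r : nk_separated s M -> lin_sys s M x -> is_min_dist M s r ->
  Rabs (sig_diff s M x) <= 2 * r.
Proof.
  intros Hg Hx [[Sm [HS Hr]] _].
  destruct (in_S_dist_lower s M Sm r HS Hr) as [c Hc].
  assert (Hpos := lin_sys_pos M x Hg Hx).
  assert (Hz : sum_f_R0 (fun k => (-1) ^ k * x k * gen_poly s c (INR (nk s M k))) s = 0)
    by (apply code_moment_poly, gen_poly_is_poly; auto using lin_sys_moments).
  (* subtracting the vanishing moment of the polynomial diagonal of [S] *)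
  rewrite sig_diff_moment by (auto; intros; left; auto).
  replace (sum_f_R0 (fun k => (-1) ^ k * x k * INR (nk s M k) ^ s) s)
    with (sum_f_R0 (fun k => (-1) ^ k * x k * (INR (nk s M k) ^ s - gen_poly s c (INR (nk s M k)))) s)
    by (rewrite (sum_eq _ (fun k => (-1) ^ k * x k * INR (nk s M k) ^ s
                                  - (-1) ^ k * x k * gen_poly s c (INR (nk s M k)))) by (intros; ring);
        rewrite minus_sum, Hz; ring).
  eapply Rle_trans; [apply Rsum_abs|].
  destruct Hx as [_ [_ Hmass]].
  replace (2 * r) with (r * sum_f_R0 (fun k => x k) s) by (rewrite Hmass; ring).
  rewrite scal_sum. apply sum_Rle. intros k Hk. cbv beta.
  rewrite !Rabs_mult, Rabs_neg1_pow, (Rabs_pos_eq (x k)), Rmult_1_l by (left; auto).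
  apply Rmult_le_compat_l; [left; auto|]. apply Hc, nk_le_M; auto.
Qed.

Lemma min_dist_cheb_bound M : (1 <= M)%nat ->
  exists r, is_min_dist M s r /\ 2 * r <= 4 * (INR M / 4) ^ s.
Proof.
  intros HM. destruct (min_dist_exists s M hs) as [r Hr]. exists r. split; auto.
  assert (H := min_dist_le_cheb s M hs HM r Hr). unfold cheb_dev in H. lra.
Qed.

Lemma signal_min_dist_sandwich M x r : (1 <= M)%nat -> nk_separated s M -> lin_sys s M x ->
  is_min_dist M s r -> 0 < signal_ratio M ->
  signal_scale M * signal_ratio M <= 2 * r <= signal_scale M.
Proof.
  intros HM Hg Hx Hr HE.
  assert (HMpos : 0 < INR M) by (apply lt_0_INR; lia).
  assert (HK : 0 < signal_scale M)
    by (apply Rmult_lt_0_compat; [lra|apply pow_lt, Rdiv_lt_0_compat; lra]).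
  split.
  - assert (H := sig_diff_le_min_dist M x r Hg Hx Hr).
    rewrite (sig_diff_scaled M x), !Rabs_mult, Rabs_neg1_pow, !Rabs_pos_eq in H by (auto; lra). lra.
  - assert (H := min_dist_le_cheb s M hs HM r Hr). unfold cheb_dev in H. unfold signal_scale. lra.
Qed.

Lemma qfi_cv t : t <> 0 -> forall eps, 0 < eps -> exists N, forall M x r,
  (N <= M)%nat -> lin_sys s M x -> is_min_dist M s r ->
  Rabs (t ^ 2 * sig_diff s M x ^ 2 / (4 * t ^ 2 * r ^ 2) - 1) < eps /\
  Rabs (t ^ 2 * sig_diff s M x ^ 2 / (16 * t ^ 2 * (INR M / 4) ^ (2 * s)) - 1) < eps /\
  Rabs (4 * t ^ 2 * r ^ 2 / (16 * t ^ 2 * (INR M / 4) ^ (2 * s)) - 1) < eps.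
Proof.
  intros Ht eps Heps.
  set (d := Rmin 1 (eps / 3)).
  assert (Hd : 0 < d) by (apply Rmin_glb_lt; lra).
  assert (Hd1 : d <= 1) by apply Rmin_l.
  assert (Hde : d <= eps / 3) by apply Rmin_r.
  destruct (nk_separated_eventually s hs) as [Ng HNg].
  destruct (signal_ratio_cv d Hd) as [N HN].
  exists (max N (max Ng 1)). intros M x r HM Hx Hr.
  assert (Hg : nk_separated s M) by (apply HNg; lia).
  assert (HMpos : 0 < INR M) by (apply lt_0_INR; lia).
  set (K := signal_scale M). set (E := signal_ratio M).
  assert (HK : 0 < K) by (apply Rmult_lt_0_compat; [lra|apply pow_lt, Rdiv_lt_0_compat; lra]).
  assert (HE : Rabs (E - 1) < d) by (apply HN; lia).
  assert (HE2 : Rabs (E ^ 2 - 1) < eps) by (assert (H := sq_sub_1_bound E d Hd1 HE); lra).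
  assert (HEpos : 0 < E) by (apply Rabs_def2 in HE; lra).
  destruct (signal_min_dist_sandwich M x r ltac:(lia) Hg Hx Hr HEpos) as [Hlow Hup].
  fold K E in Hlow, Hup.
  destruct (qfi_ratio_bounds K E r eps HK HEpos Hlow Hup HE2) as [G1 G2].
  assert (Hsig2 : sig_diff s M x ^ 2 = E ^ 2 * K ^ 2).
  { rewrite sig_diff_scaled by (auto; lia). fold K E. replace (((-1) ^ s * K * E) ^ 2) with (((-1) ^ s * (-1) ^ s) * E ^ 2 * K ^ 2) by ring.
    rewrite neg1_pow_sq. ring. }
  assert (HK2 : 16 * (INR M / 4) ^ (2 * s) = K ^ 2).
  { unfold K, signal_scale. rewrite Nat.mul_comm, pow_mult. ring. }
  assert (Hr0 : 0 < r) by nra.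
  assert (Ht2 : t ^ 2 <> 0) by (apply pow_nonzero; auto).
  replace (16 * t ^ 2 * (INR M / 4) ^ (2 * s)) with (t ^ 2 * K ^ 2) by (rewrite <- HK2; ring).
  rewrite Hsig2. repeat split.
  - replace (t ^ 2 * (E ^ 2 * K ^ 2) / (4 * t ^ 2 * r ^ 2)) with (E ^ 2 * K ^ 2 / (4 * r ^ 2))
      by (field; split; [lra|auto]). auto.
  - replace (t ^ 2 * (E ^ 2 * K ^ 2) / (t ^ 2 * K ^ 2)) with (E ^ 2) by (field; split; [lra|auto]). auto.
  - replace (4 * t ^ 2 * r ^ 2 / (t ^ 2 * K ^ 2)) with (4 * r ^ 2 / K ^ 2) by (field; split; [lra|auto]). auto.
Qed.

End Final.
Theorem mainTheorem9 (s : nat) (hs : (2 <= s)%nat) :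
  exists M0 : nat,
    (forall M : nat, (M0 <= M)%nat ->
       (forall k : nat, (k < s)%nat ->
          (nk s M k < nk s M (S k))%nat /\ (nk s M k + 3 <= nk s M (S k))%nat) /\
       (exists x : nat -> R, lin_sys s M x) /\
       (forall x y : nat -> R, lin_sys s M x -> lin_sys s M y ->
          forall k, (k <= s)%nat -> x k = y k) /\
       (forall x : nat -> R, lin_sys s M x ->
          (forall k, (k <= s)%nat -> 0 < x k) /\
          inner M (ket0 s M x) (ket0 s M x) = RtoC 1 /\
          inner M (ket1 s M x) (ket1 s M x) = RtoC 1 /\
          inner M (ket0 s M x) (ket1 s M x) = RtoC 0 /\
          (forall S : mat, in_S M s S ->
             exists lam : R,
               mat_eq M (mmul M (projP s M x) (mmul M S (projP s M x)))
                        (mscale (RtoC lam) (projP s M x))) /\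
          inner M (ket0 s M x) (mapply M (mpow M (numop M) s) (ket1 s M x)) = RtoC 0)) /\
    (forall eps : R, 0 < eps -> exists N : nat, forall (M : nat) (x : nat -> R),
       (N <= M)%nat -> lin_sys s M x ->
       forall k, (k <= s)%nat -> Rabs (x k - x_lim s k) < eps) /\
    (forall eps : R, 0 < eps -> exists N : nat, forall (M : nat) (x : nat -> R),
       (N <= M)%nat -> lin_sys s M x ->
       Rabs (sig_diff s M x / ((-1) ^ s * INR M ^ s * powerRZ 4 (1 - Z.of_nat s)) - 1)
         < eps) /\
    (forall M : nat, (1 <= M)%nat ->
       exists r : R, is_min_dist M s r /\ 2 * r <= 4 * (INR M / 4) ^ s) /\
    (forall t : R, t <> 0 ->
       forall eps : R, 0 < eps -> exists N : nat, forall (M : nat) (x : nat -> R) (r : R),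
         (N <= M)%nat -> lin_sys s M x -> is_min_dist M s r ->
         Rabs (t ^ 2 * sig_diff s M x ^ 2 / (4 * t ^ 2 * r ^ 2) - 1) < eps /\
         Rabs (t ^ 2 * sig_diff s M x ^ 2 / (16 * t ^ 2 * (INR M / 4) ^ (2 * s)) - 1) < eps /\
         Rabs (4 * t ^ 2 * r ^ 2 / (16 * t ^ 2 * (INR M / 4) ^ (2 * s)) - 1) < eps).
Proof.
  destruct (nk_separated_eventually s hs) as [N HN].
  exists N. split; [|split; [|split; [|split]]].
  - intros M HM. apply code_properties; auto.
  - apply lin_sys_cv; auto.
  - apply signal_cv; auto.
  - apply min_dist_cheb_bound; auto.
  - apply qfi_cv; auto.
Qed.
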